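(* Let $n\ge1$ and let $\theta_2,\theta_3,\kappa_0,\kappa_1,\ldots,\kappa_n,\rho_1,\ldots,\rho_n$ be complex numbers. Define \[ b_i=-\kappa_i-\rho_1\ (i=1,\ldots,n),\quad b'=-\theta_2,\quad c_1=-\kappa_0-\rho_1+1,\quad c_i=-\rho_1+\rho_i+1\ (i=2,\ldots,n),\quad c'=1-\theta_2-\theta_3 . \] Let $\delta_1=t_1\,\partial/\partial t_1$ and $\delta_2=(t_2-1)\,\partial/\partial t_2$, and let $z=z(t_1,t_2)$ be a (locally holomorphic) solution of \begin{align*} &\Big[t_1(\delta_1+\delta_2+c_1+c'-2)\Big\{\prod_{i=1}^n(\delta_1+b_i)\Big\}-\delta_1\Big\{\prod_{i=1}^n(\delta_1+c_i-1)\Big\}\Big]z=0,\\ &\{(1-t_2)(\delta_1+\delta_2+c_1+c'-2)(\delta_2+b')-\delta_2(\delta_2+c'-1)\}z=0. \end{align*} Set \begin{align*} w_0&=-\Big\{\prod_{j=1}^n(\delta_1+b_j)\Big\}(\delta_2+c'-1)z,\\ w_1&=-b_1(b'-c'+1)\Big\{\prod_{j=2}^n(\delta_1+b_j)\Big\}(\delta_1+c_1-1)z,\\ w_i&=-(b_i-c_i+1)(b'-c'+1)\Big\{\prod_{j=i+1}^n(\delta_1+b_j)\Big\}\Big\{\prod_{j=1}^{i-1}(\delta_1+c_j-1)\Big\}\delta_1z\quad(i=2,\ldots,n),\\ w'_1&=b_1\Big\{\prod_{j=2}^n(\delta_1+b_j)\Big\}(\delta_1+c_1-1)(\delta_2+b')z,\\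 w'_i&=(b_i-c_i+1)\Big\{\prod_{j=i+1}^n(\delta_1+b_j)\Big\}\Big\{\prod_{j=1}^{i-1}(\delta_1+c_j-1)\Big\}\delta_1(\delta_2+b')z\quad(i=2,\ldots,n). \end{align*} Then $\mathbf{w}={}^t[w_0,w_1,\ldots,w_n,w'_1,\ldots,w'_n]$ satisfies the linear Pfaff system \[ d\mathbf{w}=\{A_1^{(1)}d\log(t_1-1)+A_0^{(1)}d\log t_1+A_td\log(t_1-t_2)+A_1^{(2)}d\log(t_2-1)+A_0^{(2)}d\log t_2\}\mathbf{w}, \] where, indexing rows and columns by $0,1,\ldots,2n$ (index $i\in\{1,\dots,n\}$ corresponding to $w_i$ and index $n+i$ to $w'_i$) and letting $E_{i,j}$ denote the $(2n+1)\times(2n+1)$ matrix with $1$ in entry $(i,j)$ and $0$ elsewhere, \begin{align*} A_1^{(1)}&=\theta_3E_{0,0}+\sum_{j=1}^nE_{0,j}+\sum_{i=1}^n\Big\{\theta_3(\kappa_i+\rho_i)E_{i,0}+\sum_{j=1}^n(\kappa_i+\rho_i)E_{i,j}\Big\},\\ A_0^{(1)}&=(\kappa_0+\rho_1)E_{0,0}-\sum_{j=1}^nE_{0,j}-\sum_{j=1}^nE_{0,n+j}+\sum_{i=1}^n\Big\{(\rho_1-\rho_i)E_{i,i}-\sum_{j=i+1}^n(\kappa_i+\rho_i)E_{i,j}\Big\}\\ &\quad+\sum_{i=1}^n\Big\{(\rho_1-\rho_i)E_{n+i,n+i}-\sum_{j=i+1}^n(\kappa_i+\rho_i)E_{n+i,n+j}\Big\},\\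 A_t&=\theta_2E_{0,0}+\sum_{j=1}^nE_{0,n+j}+\sum_{i=1}^n\Big\{\theta_2(\kappa_i+\rho_i)E_{n+i,0}+\sum_{j=1}^n(\kappa_i+\rho_i)E_{n+i,n+j}\Big\},\\ A_1^{(2)}&=\sum_{i=1}^n\{\theta_2E_{i,i}-\theta_3E_{i,n+i}\}+\sum_{i=1}^n\{-\theta_2E_{n+i,i}+\theta_3E_{n+i,n+i}\},\\ A_0^{(2)}&=\sum_{i=1}^n\Big\{-\theta_2(\kappa_i+\rho_i)E_{n+i,0}+\theta_2E_{n+i,i}-\sum_{j=1}^{i-1}(\kappa_i+\rho_i)E_{n+i,n+j}+(\theta_2+\kappa_0-\kappa_i)E_{n+i,n+i}\Big\}. \end{align*}
   Context: $d$ denotes the exterior derivative with respect to $(t_1,t_2)$. Products of the commuting operators $\delta_1,\delta_2$ are compositions of differential operators; empty products equal $1$. *)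

From Stdlib Require Import Reals ClassicalEpsilon.
From Coquelicot Require Import Coquelicot.
Local Open Scope C_scope.

Definition fn2 := C -> C -> C.

(* complex derivative of a one-variable function (chosen classically;
   the value is only meaningful where the derivative exists) *)
Definition cderiv (g : C -> C) (x : C) : C :=
  epsilon (inhabits (RtoC 0)) (fun l => @is_derive C_AbsRing C_NormedModule g x l).

Definition D1 (f : fn2) : fn2 := fun t1 t2 => cderiv (fun s => f s t2) t1.
Definition D2 (f : fn2) : fn2 := fun t1 t2 => cderiv (fun s => f t1 s) t2.

Definition delta1 (f : fn2) : fn2 := fun t1 t2 => t1 * D1 f t1 t2.
Definition delta2 (f : fn2) : fn2 := fun t1 t2 => (t2 - 1) * D2 f t1 t2.

Definition opc (L : fn2 -> fn2) (a : C) (f : fn2) : fn2 :=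
  fun t1 t2 => L f t1 t2 + a * f t1 t2.
Definition fadd (f g : fn2) : fn2 := fun t1 t2 => f t1 t2 + g t1 t2.
Definition fsub (f g : fn2) : fn2 := fun t1 t2 => f t1 t2 - g t1 t2.
Definition fscal (a : C) (f : fn2) : fn2 := fun t1 t2 => a * f t1 t2.
Definition fmul (h : fn2) (f : fn2) : fn2 := fun t1 t2 => h t1 t2 * f t1 t2.

(* composition product  F lo o F (lo+1) o ... o F hi  (identity if hi < lo) *)
Fixpoint prodop_aux (F : nat -> fn2 -> fn2) (lo k : nat) : fn2 -> fn2 :=
  match k with
  | O => fun f => f
  | S k' => fun f => F lo (prodop_aux F (S lo) k' f)
  end.
Definition prodop (F : nat -> fn2 -> fn2) (lo hi : nat) : fn2 -> fn2 :=
  prodop_aux F lo (S hi - lo).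

Fixpoint csum_aux (F : nat -> C) (lo k : nat) : C :=
  match k with
  | O => RtoC 0
  | S k' => F lo + csum_aux F (S lo) k'
  end.
Definition csum (F : nat -> C) (lo hi : nat) : C := csum_aux F lo (S hi - lo).

(* matrices indexed by nat x nat (only indices 0..2n are used) *)
Definition mat := nat -> nat -> C.
Definition E (i j : nat) : mat :=
  fun a b => if andb (Nat.eqb a i) (Nat.eqb b j) then RtoC 1 else RtoC 0.
Definition madd (A B : mat) : mat := fun a b => A a b + B a b.
Definition mscal (c : C) (A : mat) : mat := fun a b => c * A a b.
Definition mopp (A : mat) : mat := fun a b => - A a b.
Definition msum (F : nat -> mat) (lo hi : nat) : mat :=
  fun a b => csum (fun i => F i a b) lo hi.

(* holomorphy on an open set U of C^2: (complex, Frechet) differentiable at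
   every point of U, and likewise for the partial derivatives, recursively
   (equivalent to holomorphy, since partials of holomorphic maps are
   holomorphic) *)
Definition cdiff2_at (f : fn2) (p : C * C) : Prop :=
  @ex_filterdiff C_AbsRing
    (prod_NormedModule C_AbsRing C_NormedModule C_NormedModule)
    C_NormedModule (fun q => f (fst q) (snd q)) (locally p).

CoInductive holo_on (U : C * C -> Prop) : fn2 -> Prop :=
  | holo_on_intro (f : fn2) :
      (forall p, U p -> cdiff2_at f p) ->
      holo_on U (D1 f) -> holo_on U (D2 f) -> holo_on U f.

Section Data.
Variables (n : nat) (th2 th3 : C) (ka rho : nat -> C).

Definition b_ (i : nat) : C := - ka i - rho 1%nat.
Definition b' : C := - th2.
Definition c_ (i : nat) : C :=
  if Nat.eqb i 1 then - ka 0%nat - rho 1%nat + 1 else - rho 1%nat + rho i + 1.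
Definition c' : C := 1 - th2 - th3.

Definition Bop (j : nat) : fn2 -> fn2 := opc delta1 (b_ j).
Definition Cop (j : nat) : fn2 -> fn2 := opc delta1 (c_ j - 1).

Definition eq1 (z : fn2) : fn2 :=
  fsub (fmul (fun t1 _ => t1)
          (opc (fun f => fadd (delta1 f) (delta2 f)) (c_ 1 + c' - 2)
             (prodop Bop 1 n z)))
       (delta1 (prodop Cop 1 n z)).
Definition eq2 (z : fn2) : fn2 :=
  fsub (fmul (fun _ t2 => 1 - t2)
          (opc (fun f => fadd (delta1 f) (delta2 f)) (c_ 1 + c' - 2)
             (opc delta2 b' z)))
       (delta2 (opc delta2 (c' - 1) z)).

Definition wvec (z : fn2) (k : nat) : fn2 :=
  if Nat.eqb k 0 then
    fscal (-1) (prodop Bop 1 n (opc delta2 (c' - 1) z))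
  else if Nat.eqb k 1 then
    fscal (- b_ 1 * (b' - c' + 1)) (prodop Bop 2 n (Cop 1 z))
  else if Nat.leb k n then
    fscal (- (b_ k - c_ k + 1) * (b' - c' + 1))
      (prodop Bop (S k) n (prodop Cop 1 (k - 1) (delta1 z)))
  else if Nat.eqb k (S n) then
    fscal (b_ 1) (prodop Bop 2 n (Cop 1 (opc delta2 b' z)))
  else
    let i := (k - n)%nat in
    fscal (b_ i - c_ i + 1)
      (prodop Bop (S i) n (prodop Cop 1 (i - 1) (delta1 (opc delta2 b' z)))).

Definition kr (i : nat) : C := ka i + rho i.

Definition A11 : mat :=
  madd (mscal th3 (E 0 0))
  (madd (msum (fun j => E 0 j) 1 n)
        (msum (fun i => madd (mscal (th3 * kr i) (E i 0))
                             (msum (fun j => mscal (kr i) (E i j)) 1 n)) 1 n)).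

Definition A01 : mat :=
  madd (mscal (ka 0%nat + rho 1%nat) (E 0 0))
  (madd (mopp (msum (fun j => E 0 j) 1 n))
  (madd (mopp (msum (fun j => E 0 (n + j)) 1 n))
  (madd (msum (fun i => madd (mscal (rho 1%nat - rho i) (E i i))
                 (mopp (msum (fun j => mscal (kr i) (E i j)) (S i) n))) 1 n)
        (msum (fun i => madd (mscal (rho 1%nat - rho i) (E (n + i) (n + i)))
                 (mopp (msum (fun j => mscal (kr i) (E (n + i) (n + j))) (S i) n))) 1 n)))).

Definition At : mat :=
  madd (mscal th2 (E 0 0))
  (madd (msum (fun j => E 0 (n + j)) 1 n)
        (msum (fun i => madd (mscal (th2 * kr i) (E (n + i) 0))
                 (msum (fun j => mscal (kr i) (E (n + i) (n + j))) 1 n)) 1 n)).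

Definition A12 : mat :=
  madd (msum (fun i => madd (mscal th2 (E i i)) (mscal (- th3) (E i (n + i)))) 1 n)
       (msum (fun i => madd (mscal (- th2) (E (n + i) i))
                            (mscal th3 (E (n + i) (n + i)))) 1 n).

Definition A02 : mat :=
  msum (fun i =>
    madd (mscal (- th2 * kr i) (E (n + i) 0))
    (madd (mscal th2 (E (n + i) i))
    (madd (mopp (msum (fun j => mscal (kr i) (E (n + i) (n + j))) 1 (i - 1)))
          (mscal (th2 + ka 0%nat - ka i) (E (n + i) (n + i)))))) 1 n.

End Data.

From Pilot Require Import Defs.
From Stdlib Require Import Reals ClassicalEpsilon FunctionalExtensionality PropExtensionality.
From Stdlib Require Import Lia Lra.
From Coquelicot Require Import Coquelicot.
Local Open Scope C_scope.

(* The entries of [w] are polynomials in the Euler operators [delta1] and [delta2]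
   applied to [z]. These operators commute (mixed partial derivatives of a holomorphic
   function agree), and polynomials in [delta1] alone commute with multiplication by
   functions of [t2] (and symmetrically), so every identity below reduces to algebra
   in a commutative ring of operators. Since [(delta1 + c_j - 1) - (delta1 + b_j)]
   is the constant [kappa_j + rho_j] for [j >= 2], the sums of the [w_i] appearing in
   the Pfaff system telescope to [delta1 (prod_j (delta1 + c_j - 1)) z]; the first
   equation turns this into [t1 (delta1 + delta2 + c_1 + c' - 2) prod_j (delta1 + b_j) z],
   and the second equation eliminates [delta2^2 z]. What remains in each row is a
   rational identity in [t1] and [t2]. *)

Lemma cderiv_correct (g : C -> C) x :
  @ex_derive C_AbsRing C_NormedModule g x ->
  @is_derive C_AbsRing C_NormedModule g x (cderiv g x).
Proof. intros [l H]. unfold cderiv. apply epsilon_spec. exists l. exact H. Qed.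

Lemma cderiv_unique (g : C -> C) x l :
  @is_derive C_AbsRing C_NormedModule g x l -> cderiv g x = l.
Proof.
  intros H. rewrite <- (is_C_derive_unique _ _ _ H).
  symmetry; apply is_C_derive_unique, cderiv_correct. exists l; exact H.
Qed.

(* [C_NormedModule] and [AbsRing_NormedModule C_AbsRing] are the same space, but
   only up to eta-expansion of their records, so derivatives must be transported. *)
Lemma is_derive_to_AbsRing (f : C -> C) x l :
  @is_derive C_AbsRing C_NormedModule f x l ->
  @is_derive C_AbsRing (AbsRing_NormedModule C_AbsRing) f x l.
Proof. intros [[H1 H2 H3] H]. repeat split; assumption. Qed.

Lemma is_derive_of_AbsRing (f : C -> C) x l :
  @is_derive C_AbsRing (AbsRing_NormedModule C_AbsRing) f x l ->
  @is_derive C_AbsRing C_NormedModule f x l.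
Proof. intros [[H1 H2 H3] H]. repeat split; assumption. Qed.

Lemma ex_filterdiff_to_AbsRing {T : NormedModule C_AbsRing} F (f : T -> C) :
  @ex_filterdiff C_AbsRing T C_NormedModule f F ->
  @ex_filterdiff C_AbsRing T (AbsRing_NormedModule C_AbsRing) f F.
Proof. intros [l [[H1 H2 H3] H]]. exists l. repeat split; assumption. Qed.

Lemma ex_filterdiff_of_AbsRing {T : NormedModule C_AbsRing} F (f : T -> C) :
  @ex_filterdiff C_AbsRing T (AbsRing_NormedModule C_AbsRing) f F ->
  @ex_filterdiff C_AbsRing T C_NormedModule f F.
Proof. intros [l [[H1 H2 H3] H]]. exists l. repeat split; assumption. Qed.

Lemma C_mult_comm : forall x y : C_AbsRing, mult x y = mult y x.
Proof. intros; apply Cmult_comm. Qed.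

Lemma is_derive_C_plus (f g : C -> C) x df dg :
  @is_derive C_AbsRing C_NormedModule f x df ->
  @is_derive C_AbsRing C_NormedModule g x dg ->
  @is_derive C_AbsRing C_NormedModule (fun s => f s + g s) x (df + dg).
Proof. intros Hf Hg. exact (is_derive_plus f g x df dg Hf Hg). Qed.

Lemma is_derive_C_mult (f g : C -> C) x df dg :
  @is_derive C_AbsRing C_NormedModule f x df ->
  @is_derive C_AbsRing C_NormedModule g x dg ->
  @is_derive C_AbsRing C_NormedModule (fun s => f s * g s) x (df * g x + f x * dg).
Proof.
  intros Hf Hg. apply is_derive_of_AbsRing.
  exact (is_derive_mult f g x df dg (is_derive_to_AbsRing _ _ _ Hf)
           (is_derive_to_AbsRing _ _ _ Hg) C_mult_comm).
Qed.

Lemma is_derive_C_scal (f : C -> C) k x df :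
  @is_derive C_AbsRing C_NormedModule f x df ->
  @is_derive C_AbsRing C_NormedModule (fun s => k * f s) x (k * df).
Proof.
  intros Hf. replace (k * df) with (RtoC 0 * f x + k * df) by ring.
  apply is_derive_C_mult; [apply (@is_derive_const C_AbsRing C_NormedModule) | exact Hf].
Qed.

Lemma is_derive_C_mult_id (f : C -> C) x df :
  @is_derive C_AbsRing C_NormedModule f x df ->
  @is_derive C_AbsRing C_NormedModule (fun s => s * f s) x (f x + x * df).
Proof.
  intros Hf. replace (f x + x * df) with (RtoC 1 * f x + x * df) by ring.
  apply is_derive_C_mult; [|exact Hf].
  apply is_derive_of_AbsRing, (@is_derive_id C_AbsRing).
Qed.

Lemma is_linear_C_id :
  @is_linear C_AbsRing (AbsRing_NormedModule C_AbsRing) C_NormedModule (fun s => s).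
Proof.
  split; try reflexivity.
  exists 1%R. split; [lra|]. intros x. rewrite Rmult_1_l. apply Rle_refl.
Qed.

Lemma Cminus_eq_0 (x y : C) : x - y = RtoC 0 -> x = y.
Proof. intros H. replace x with ((x - y) + y) by ring. rewrite H. ring. Qed.

Lemma Cminus_neq_0 (x y : C) : x <> y -> x - y <> RtoC 0.
Proof. intros H E. apply H, Cminus_eq_0, E. Qed.

Lemma Cmult_cancel_l (x u v : C) : x <> RtoC 0 -> x * u = x * v -> u = v.
Proof.
  intros Hx H. replace u with (/ x * (x * u)) by (field; auto).
  rewrite H. field; auto.
Qed.

(** * Holomorphic functions of two variables *)

Definition eq_on (U : C * C -> Prop) (f g : fn2) : Prop :=
  forall a b, U (a, b) -> f a b = g a b.

Lemma locally_slice_fst (U : C * C -> Prop) a b : open U -> U (a, b) ->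
  @locally C_UniformSpace a (fun s => U (s, b)).
Proof.
  intros hU H. destruct (hU _ H) as [eps He]. exists eps. intros s Hs.
  apply He. split; [exact Hs | apply ball_center].
Qed.

Lemma locally_slice_snd (U : C * C -> Prop) a b : open U -> U (a, b) ->
  @locally C_UniformSpace b (fun s => U (a, s)).
Proof.
  intros hU H. destruct (hU _ H) as [eps He]. exists eps. intros s Hs.
  apply He. split; [apply ball_center | exact Hs].
Qed.

Lemma locally_C_AbsRing a (P : C -> Prop) :
  @locally C_UniformSpace a P -> @locally (AbsRing_UniformSpace C_AbsRing) a P.
Proof.
  intros [eps H]. exists eps. intros y Hy. apply H.
  apply C_NormedModule_mixin_compat1. exact Hy.
Qed.

Lemma cdiff2_ex_derive_fst f a b : cdiff2_at f (a, b) ->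
  @ex_derive C_AbsRing C_NormedModule (fun s => f s b) a.
Proof.
  intros [l Hl]. apply ex_derive_filterdiff. eexists.
  apply (filterdiff_comp'_2 (K:=C_AbsRing) (T:=AbsRing_NormedModule C_AbsRing)
           (U:=C_NormedModule) (V:=C_NormedModule) (W:=C_NormedModule)
           (fun s : C => s) (fun _ : C => b) (fun u v => f u v) a
           (fun s => s) (fun _ => zero) (fun u v => l (u, v))).
  - apply filterdiff_linear, is_linear_C_id.
  - apply (filterdiff_const (K:=C_AbsRing) (U:=AbsRing_NormedModule C_AbsRing)
             (V:=C_NormedModule)).
  - eapply filterdiff_ext_lin; [exact Hl | intros [u v]; reflexivity].
Qed.

Lemma cdiff2_ex_derive_snd f a b : cdiff2_at f (a, b) ->
  @ex_derive C_AbsRing C_NormedModule (fun s => f a s) b.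
Proof.
  intros [l Hl]. apply ex_derive_filterdiff. eexists.
  apply (filterdiff_comp'_2 (K:=C_AbsRing) (T:=AbsRing_NormedModule C_AbsRing)
           (U:=C_NormedModule) (V:=C_NormedModule) (W:=C_NormedModule)
           (fun _ : C => a) (fun s : C => s) (fun u v => f u v) b
           (fun _ => zero) (fun s => s) (fun u v => l (u, v))).
  - apply (filterdiff_const (K:=C_AbsRing) (U:=AbsRing_NormedModule C_AbsRing)
             (V:=C_NormedModule)).
  - apply filterdiff_linear, is_linear_C_id.
  - eapply filterdiff_ext_lin; [exact Hl | intros [u v]; reflexivity].
Qed.

Section Holomorphy.
Variable U : C * C -> Prop.
Hypothesis hU : open U.

Local Notation "f == g" := (eq_on U f g) (at level 70).
Local Notation holo := (holo_on U).

Lemma eq_on_refl f : f == f.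
Proof. intros a b _; reflexivity. Qed.

Lemma eq_on_sym f g : f == g -> g == f.
Proof. intros H a b h; symmetry; auto. Qed.

Lemma eq_on_trans f g h : f == g -> g == h -> f == h.
Proof. intros H1 H2 a b hh; rewrite H1; auto. Qed.

Lemma fadd_eq_on f f' g g' : f == f' -> g == g' -> fadd f g == fadd f' g'.
Proof. intros H1 H2 a b h. unfold fadd. rewrite H1, H2; auto. Qed.

Lemma fscal_eq_on k f f' : f == f' -> fscal k f == fscal k f'.
Proof. intros H a b h. unfold fscal. rewrite H; auto. Qed.

Lemma D1_eq_on f g : f == g -> D1 f == D1 g.
Proof.
  intros H a b Hab. unfold D1, cderiv. f_equal.
  apply functional_extensionality; intro l. apply propositional_extensionality.
  assert (HL : @locally (AbsRing_UniformSpace C_AbsRing) a (fun s => f s b = g s b)).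
  { apply locally_C_AbsRing. eapply filter_imp; [|exact (locally_slice_fst U a b hU Hab)].
    intros s Hs; apply H; exact Hs. }
  split; intro Hd; eapply (filterdiff_ext_locally (K:=C_AbsRing)
    (U:=AbsRing_NormedModule C_AbsRing) (V:=C_NormedModule)); try exact Hd.
  - exact HL.
  - eapply filter_imp; [|exact HL]. intros; symmetry; auto.
Qed.

Lemma D2_eq_on f g : f == g -> D2 f == D2 g.
Proof.
  intros H a b Hab. unfold D2, cderiv. f_equal.
  apply functional_extensionality; intro l. apply propositional_extensionality.
  assert (HL : @locally (AbsRing_UniformSpace C_AbsRing) b (fun s => f a s = g a s)).
  { apply locally_C_AbsRing. eapply filter_imp; [|exact (locally_slice_snd U a b hU Hab)].
    intros s Hs; apply H; exact Hs. }
  split; intro Hd; eapply (filterdiff_ext_locally (K:=C_AbsRing)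
    (U:=AbsRing_NormedModule C_AbsRing) (V:=C_NormedModule)); try exact Hd.
  - exact HL.
  - eapply filter_imp; [|exact HL]. intros; symmetry; auto.
Qed.

Lemma holo_cdiff2 f p : holo f -> U p -> cdiff2_at f p. Proof. destruct 1; auto. Qed.
Lemma holo_D1 f : holo f -> holo (D1 f). Proof. destruct 1; auto. Qed.
Lemma holo_D2 f : holo f -> holo (D2 f). Proof. destruct 1; auto. Qed.

(* [holo_on] is coinductive; closure properties are proved by exhibiting a class
   of differentiable functions that is stable under [D1] and [D2]. *)
Inductive holo_closure : fn2 -> Prop :=
| closure_holo f : holo f -> holo_closure f
| closure_add f g : holo_closure f -> holo_closure g -> holo_closure (fadd f g)
| closure_scal a f : holo_closure f -> holo_closure (fscal a f)
| closure_mul_t1 f : holo_closure f -> holo_closure (fmul (fun t1 _ => t1) f)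
| closure_mul_t2 f : holo_closure f -> holo_closure (fmul (fun _ t2 => t2) f)
| closure_eq_on f g : holo_closure f -> f == g -> holo_closure g.

Lemma holo_closure_cdiff2 f : holo_closure f -> forall p, U p -> cdiff2_at f p.
Proof.
  induction 1 as [f Hf | f g _ IHf _ IHg | a f _ IHf | f _ IHf | f _ IHf | f g _ IHf Hfg];
    intros p Hp; unfold cdiff2_at.
  - apply holo_cdiff2; assumption.
  - apply (ex_filterdiff_ext (F:=locally p) (fun q => @plus C_NormedModule
             (f (fst q) (snd q)) (g (fst q) (snd q)))); [reflexivity|].
    apply ex_filterdiff_plus_fct; [apply IHf | apply IHg]; exact Hp.
  - apply (ex_filterdiff_ext (F:=locally p) (fun q =>
             @scal C_AbsRing C_NormedModule a (f (fst q) (snd q)))); [reflexivity|].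
    apply (ex_filterdiff_scal_r_fct (K:=C_AbsRing) (V:=C_NormedModule));
      [apply C_mult_comm | apply IHf, Hp].
  - apply ex_filterdiff_of_AbsRing.
    apply (ex_filterdiff_ext (F:=locally p) (fun q =>
             @mult C_AbsRing (fst q) (f (fst q) (snd q)))); [reflexivity|].
    apply (ex_filterdiff_mult_fct (K:=C_AbsRing)
      (fun q : prod_NormedModule C_AbsRing C_NormedModule C_NormedModule => fst q)
      (fun q => f (fst q) (snd q)) p); [apply C_mult_comm| |].
    + apply ex_filterdiff_to_AbsRing, ex_filterdiff_linear, is_linear_fst.
    + apply ex_filterdiff_to_AbsRing, IHf, Hp.
  - apply ex_filterdiff_of_AbsRing.
    apply (ex_filterdiff_ext (F:=locally p) (fun q =>
             @mult C_AbsRing (snd q) (f (fst q) (snd q)))); [reflexivity|].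
    apply (ex_filterdiff_mult_fct (K:=C_AbsRing)
      (fun q : prod_NormedModule C_AbsRing C_NormedModule C_NormedModule => snd q)
      (fun q => f (fst q) (snd q)) p); [apply C_mult_comm| |].
    + apply ex_filterdiff_to_AbsRing, ex_filterdiff_linear, is_linear_snd.
    + apply ex_filterdiff_to_AbsRing, IHf, Hp.
  - apply (ex_filterdiff_ext_locally (fun q => f (fst q) (snd q))); [|apply IHf, Hp].
    eapply filter_imp; [|exact (hU _ Hp)]. intros [u v] Huv. apply Hfg, Huv.
Qed.

Lemma holo_closure_is_derive_D1 f a b : holo_closure f -> U (a, b) ->
  @is_derive C_AbsRing C_NormedModule (fun s => f s b) a (D1 f a b).
Proof. intros; apply cderiv_correct, cdiff2_ex_derive_fst, holo_closure_cdiff2; auto. Qed.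

Lemma holo_closure_is_derive_D2 f a b : holo_closure f -> U (a, b) ->
  @is_derive C_AbsRing C_NormedModule (fun s => f a s) b (D2 f a b).
Proof. intros; apply cderiv_correct, cdiff2_ex_derive_snd, holo_closure_cdiff2; auto. Qed.

Lemma holo_closure_D1 f : holo_closure f -> holo_closure (D1 f).
Proof.
  induction 1 as [f Hf | f g Hf IHf Hg IHg | a f Hf IHf | f Hf IHf | f Hf IHf | f g _ IHf Hfg].
  - apply closure_holo, holo_D1, Hf.
  - eapply closure_eq_on; [apply closure_add; [exact IHf | exact IHg]|].
    intros a b Hab. symmetry. apply cderiv_unique, is_derive_C_plus;
      apply holo_closure_is_derive_D1; auto.
  - eapply closure_eq_on; [apply closure_scal, IHf|].
    intros a' b Hab. symmetry. apply cderiv_unique, is_derive_C_scal;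
      apply holo_closure_is_derive_D1; auto.
  - eapply closure_eq_on; [apply closure_add; [exact Hf | apply closure_mul_t1, IHf]|].
    intros a b Hab. symmetry. apply cderiv_unique.
    apply (is_derive_C_mult_id (fun s => f s b)), holo_closure_is_derive_D1; auto.
  - eapply closure_eq_on; [apply closure_mul_t2, IHf|].
    intros a b Hab. symmetry. apply cderiv_unique.
    apply (is_derive_C_scal (fun s => f s b)), holo_closure_is_derive_D1; auto.
  - eapply closure_eq_on; [exact IHf | apply D1_eq_on, Hfg].
Qed.

Lemma holo_closure_D2 f : holo_closure f -> holo_closure (D2 f).
Proof.
  induction 1 as [f Hf | f g Hf IHf Hg IHg | a f Hf IHf | f Hf IHf | f Hf IHf | f g _ IHf Hfg].
  - apply closure_holo, holo_D2, Hf.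
  - eapply closure_eq_on; [apply closure_add; [exact IHf | exact IHg]|].
    intros a b Hab. symmetry. apply cderiv_unique, is_derive_C_plus;
      apply holo_closure_is_derive_D2; auto.
  - eapply closure_eq_on; [apply closure_scal, IHf|].
    intros a' b Hab. symmetry. apply cderiv_unique, is_derive_C_scal;
      apply holo_closure_is_derive_D2; auto.
  - eapply closure_eq_on; [apply closure_mul_t1, IHf|].
    intros a b Hab. symmetry. apply cderiv_unique.
    apply (is_derive_C_scal (fun s => f a s)), holo_closure_is_derive_D2; auto.
  - eapply closure_eq_on; [apply closure_add; [exact Hf | apply closure_mul_t2, IHf]|].
    intros a b Hab. symmetry. apply cderiv_unique.
    apply (is_derive_C_mult_id (fun s => f a s)), holo_closure_is_derive_D2; auto.
  - eapply closure_eq_on; [exact IHf | apply D2_eq_on, Hfg].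
Qed.

CoFixpoint holo_of_closure f (H : holo_closure f) : holo f :=
  holo_on_intro U f (holo_closure_cdiff2 f H)
    (holo_of_closure (D1 f) (holo_closure_D1 f H))
    (holo_of_closure (D2 f) (holo_closure_D2 f H)).

Lemma is_derive_D1 f a b : holo f -> U (a, b) ->
  @is_derive C_AbsRing C_NormedModule (fun s => f s b) a (D1 f a b).
Proof. intros; apply holo_closure_is_derive_D1; [apply closure_holo|]; auto. Qed.

Lemma is_derive_D2 f a b : holo f -> U (a, b) ->
  @is_derive C_AbsRing C_NormedModule (fun s => f a s) b (D2 f a b).
Proof. intros; apply holo_closure_is_derive_D2; [apply closure_holo|]; auto. Qed.

Lemma is_derive_of_delta1 f a b l : holo f -> U (a, b) -> a <> RtoC 0 ->
  delta1 f a b = a * l -> @is_derive C_AbsRing C_NormedModule (fun s => f s b) a l.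
Proof.
  intros Hf Hab Ha Hd. replace l with (D1 f a b) by (apply (Cmult_cancel_l a); auto).
  apply is_derive_D1; auto.
Qed.

Lemma is_derive_of_delta2 f a b l : holo f -> U (a, b) -> b - 1 <> RtoC 0 ->
  delta2 f a b = (b - 1) * l -> @is_derive C_AbsRing C_NormedModule (fun s => f a s) b l.
Proof.
  intros Hf Hab Hb Hd. replace l with (D2 f a b) by (apply (Cmult_cancel_l (b - 1)); auto).
  apply is_derive_D2; auto.
Qed.

Lemma holo_fadd f g : holo f -> holo g -> holo (fadd f g).
Proof. intros; apply holo_of_closure, closure_add; apply closure_holo; auto. Qed.

Lemma holo_fscal a f : holo f -> holo (fscal a f).
Proof. intros; apply holo_of_closure, closure_scal, closure_holo; auto. Qed.

Lemma holo_eq_on f g : holo f -> f == g -> holo g.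
Proof. intros; eapply holo_of_closure, closure_eq_on; [apply closure_holo|]; eauto. Qed.

Lemma holo_delta1 f : holo f -> holo (delta1 f).
Proof. intros; apply holo_of_closure, closure_mul_t1, closure_holo, holo_D1; auto. Qed.

Lemma holo_delta2 f : holo f -> holo (delta2 f).
Proof.
  intros H. apply holo_eq_on with (fadd (fmul (fun _ t2 => t2) (D2 f)) (fscal (-1) (D2 f))).
  - apply holo_of_closure, closure_add.
    + apply closure_mul_t2, closure_holo, holo_D2; auto.
    + apply closure_scal, closure_holo, holo_D2; auto.
  - intros a b _. unfold fadd, fmul, fscal, delta2. ring.
Qed.

Lemma D1_fadd f g : holo f -> holo g -> D1 (fadd f g) == fadd (D1 f) (D1 g).
Proof. intros Hf Hg a b Hab. apply cderiv_unique, is_derive_C_plus; apply is_derive_D1; auto. Qed.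

Lemma D2_fadd f g : holo f -> holo g -> D2 (fadd f g) == fadd (D2 f) (D2 g).
Proof. intros Hf Hg a b Hab. apply cderiv_unique, is_derive_C_plus; apply is_derive_D2; auto. Qed.

Lemma D1_mul_t2 (psi : C -> C) f : holo f ->
  D1 (fun a b => psi b * f a b) == (fun a b => psi b * D1 f a b).
Proof. intros Hf a b Hab. apply cderiv_unique, is_derive_C_scal, is_derive_D1; auto. Qed.

Lemma D2_mul_t1 (psi : C -> C) f : holo f ->
  D2 (fun a b => psi a * f a b) == (fun a b => psi a * D2 f a b).
Proof. intros Hf a b Hab. apply cderiv_unique, is_derive_C_scal, is_derive_D2; auto. Qed.

Lemma D1_fscal k f : holo f -> D1 (fscal k f) == fscal k (D1 f).
Proof. exact (D1_mul_t2 (fun _ => k) f). Qed.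

Lemma D2_fscal k f : holo f -> D2 (fscal k f) == fscal k (D2 f).
Proof. exact (D2_mul_t1 (fun _ => k) f). Qed.

End Holomorphy.

(** * Symmetry of mixed partial derivatives *)

(* Coquelicot's [Schwarz] is a theorem about real functions of two real
   variables; it is applied to the real and imaginary parts of [f] along the
   real directions, which is enough since a complex number is determined by
   these two components. *)
Record real_functional (sel : C -> R) : Prop := {
  real_functional_sub : forall c d : C, sel (c - d) = (sel c - sel d)%R;
  real_functional_scal : forall (r : R) (c : C), sel (RtoC r * c) = (r * sel c)%R;
  real_functional_bound : forall c, (Rabs (sel c) <= Cmod c)%R }.

Lemma real_functional_Re : real_functional Re.
Proof.
  split.
  - intros [? ?] [? ?]; unfold Cminus, Cplus, Copp; simpl; ring.
  - intros ? [? ?]; unfold RtoC, Cmult; simpl; ring.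
  - apply re_le_Cmod.
Qed.

Lemma real_functional_Im : real_functional Im.
Proof.
  split.
  - intros [? ?] [? ?]; unfold Cminus, Cplus, Copp; simpl; ring.
  - intros ? [? ?]; unfold RtoC, Cmult; simpl; ring.
  - intros c. eapply Rle_trans; [|apply Rmax_Cmod]. apply Rmax_r.
Qed.

Lemma Cplus_RtoC_minus (x : C) (u u0 : R) : x + RtoC u - (x + RtoC u0) = RtoC (u - u0).
Proof. unfold Cminus, Cplus, Copp, RtoC. simpl. f_equal; ring. Qed.

Lemma Cplus_0_r (a : C) : a + RtoC 0 = a.
Proof. destruct a as [x y]; unfold Cplus, RtoC; simpl; f_equal; ring. Qed.

Lemma is_derive_real_functional (g : C -> C) x0 u0 l sel : real_functional sel ->
  @is_derive C_AbsRing C_NormedModule g (x0 + RtoC u0) l ->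
  @is_derive R_AbsRing R_NormedModule (fun u : R => sel (g (x0 + RtoC u))) u0 (sel l).
Proof.
  intros [Hsub Hscal Hbd] [_ Hd]. split; [apply is_linear_scal_l|].
  intros x' Hx'.
  apply (is_filter_lim_locally_unique (K:=R_AbsRing) (V:=R_NormedModule)) in Hx'. subst x'.
  intros eps.
  assert (Hx : @is_filter_lim (AbsRing_NormedModule C_AbsRing)
     (@locally (AbsRing_UniformSpace C_AbsRing) (x0 + RtoC u0)) (x0 + RtoC u0))
    by (intros P HP; exact HP).
  destruct (Hd _ Hx eps) as [delta Hdl]. exists delta. intros u Hu.
  assert (Hb : @ball (AbsRing_UniformSpace C_AbsRing) (x0 + RtoC u0) delta (x0 + RtoC u)).
  { change (Cmod (x0 + RtoC u - (x0 + RtoC u0)) < delta)%R.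
    rewrite Cplus_RtoC_minus, Cmod_R. exact Hu. }
  specialize (Hdl _ Hb).
  change (Rle (Rabs (Rminus (Rminus (sel (g (x0 + RtoC u))) (sel (g (x0 + RtoC u0))))
                            (Rmult (Rminus u u0) (sel l))))
              (Rmult eps (Rabs (Rminus u u0)))).
  change (Rle (Cmod (g (x0 + RtoC u) - g (x0 + RtoC u0) - (x0 + RtoC u - (x0 + RtoC u0)) * l))
              (Rmult eps (Cmod (x0 + RtoC u - (x0 + RtoC u0))))) in Hdl.
  rewrite Cplus_RtoC_minus, Cmod_R in Hdl. eapply Rle_trans; [|exact Hdl].
  rewrite <- Hscal, <- !Hsub. apply Hbd.
Qed.

Lemma ball_shift (a b : C) (u v : R) (d : posreal) : (Rabs u < d)%R -> (Rabs v < d)%R ->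
  ball (a, b) d (a + RtoC u, b + RtoC v).
Proof.
  intros Hu Hv.
  assert (H0 : (Rabs 0 < d)%R) by (rewrite Rabs_R0; apply cond_pos).
  split; split; simpl;
    match goal with |- ball ?x _ (?x + ?y)%R =>
      change (Rabs ((x + y) - x) < d)%R; replace ((x + y) - x)%R with y by ring
    end; assumption.
Qed.

Definition real_slice (sel : C -> R) (a b : C) (h : fn2) (u v : R) : R :=
  sel (h (a + RtoC u) (b + RtoC v)).

Lemma continuity_2d_real_functional (h : fn2) a b sel : real_functional sel ->
  cdiff2_at h (a, b) ->
  continuity_2d_pt (real_slice sel a b h) 0 0.
Proof.
  intros [Hsub _ Hbd] Hc eps.
  assert (He2 : (0 < eps / 2)%R) by (destruct eps; simpl; lra).
  destruct (filterdiff_continuous _ _ Hc (ball (h a b) (mkposreal _ He2)) (locally_ball _ _))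
    as [d Hd].
  exists d. intros u v Hu Hv. rewrite Rminus_0_r in Hu, Hv.
  specialize (Hd _ (ball_shift a b u v d Hu Hv)). simpl in Hd.
  pose proof (C_NormedModule_mixin_compat2 (h a b) _ (mkposreal _ He2) Hd) as Hd2. simpl in Hd2.
  assert (sqrt 2 < 2)%R by (rewrite <- (sqrt_square 2) at 2 by lra; apply sqrt_lt_1; lra).
  unfold real_slice. rewrite !Cplus_0_r, <- Hsub. eapply Rle_lt_trans; [apply Hbd|].
  eapply Rlt_le_trans; [exact Hd2|]. destruct eps as [e He]; simpl. nra.
Qed.

Lemma locally_Rabs_lt (u delta : R) : (Rabs u < delta)%R ->
  @locally R_UniformSpace u (fun z => Rabs z < delta)%R.
Proof.
  intros H. assert (Hp : (0 < delta - Rabs u)%R) by lra.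
  exists (mkposreal _ Hp). intros z Hz.
  change (Rabs (z - u) < delta - Rabs u)%R in Hz.
  pose proof (Rabs_triang_inv z u). lra.
Qed.

Section MixedPartials.
Variable U : C * C -> Prop.
Hypothesis hU : open U.
Variables (sel : C -> R) (a b : C) (delta : posreal).
Hypothesis Hsel : real_functional sel.
Hypothesis Hball : forall p, ball (a, b) delta p -> U p.

Local Notation F := (real_slice sel a b).

Lemma is_derive_real_slice_fst h u v : holo_on U h -> (Rabs u < delta)%R -> (Rabs v < delta)%R ->
  @is_derive R_AbsRing R_NormedModule (fun x => F h x v) u (F (D1 h) u v).
Proof.
  intros Hh Hu Hv. apply (is_derive_real_functional (fun s => h s (b + RtoC v))); auto.
  apply (is_derive_D1 U hU); auto. apply Hball, ball_shift; auto.
Qed.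

Lemma is_derive_real_slice_snd h u v : holo_on U h -> (Rabs u < delta)%R -> (Rabs v < delta)%R ->
  @is_derive R_AbsRing R_NormedModule (fun y => F h u y) v (F (D2 h) u v).
Proof.
  intros Hh Hu Hv. apply (is_derive_real_functional (fun s => h (a + RtoC u) s)); auto.
  apply (is_derive_D2 U hU); auto. apply Hball, ball_shift; auto.
Qed.

Lemma real_slice_Schwarz f : holo_on U f -> F (D1 (D2 f)) 0 0 = F (D2 (D1 f)) 0 0.
Proof.
  intros Hf.
  assert (H12 : forall u v, (Rabs u < delta)%R -> (Rabs v < delta)%R ->
     @is_derive R_AbsRing R_NormedModule (fun x => Derive (fun y => F f x y) v) u
       (F (D1 (D2 f)) u v)).
  { intros u v Hu Hv. eapply is_derive_ext_loc;
      [|apply is_derive_real_slice_fst; [apply (holo_D2 U), Hf | auto | auto]].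
    eapply filter_imp; [|apply (locally_Rabs_lt u delta Hu)]. intros x Hx.
    symmetry. apply is_derive_unique, is_derive_real_slice_snd; auto. }
  assert (H21 : forall u v, (Rabs u < delta)%R -> (Rabs v < delta)%R ->
     @is_derive R_AbsRing R_NormedModule (fun y => Derive (fun x => F f x y) u) v
       (F (D2 (D1 f)) u v)).
  { intros u v Hu Hv. eapply is_derive_ext_loc;
      [|apply is_derive_real_slice_snd; [apply (holo_D1 U), Hf | auto | auto]].
    eapply filter_imp; [|apply (locally_Rabs_lt v delta Hv)]. intros y Hy.
    symmetry. apply is_derive_unique, is_derive_real_slice_fst; auto. }
  assert (H0 : (Rabs 0 < delta)%R) by (rewrite Rabs_R0; apply cond_pos).
  rewrite <- (is_derive_unique _ _ _ (H12 0%R 0%R H0 H0)),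
          <- (is_derive_unique _ _ _ (H21 0%R 0%R H0 H0)).
  apply (Schwarz (F f) 0 0).
  - exists delta. intros u v Hu Hv. rewrite Rminus_0_r in Hu, Hv.
    repeat split; eexists;
      [apply is_derive_real_slice_fst | apply is_derive_real_slice_snd | apply H12 | apply H21];
      auto.
  - apply continuity_2d_pt_ext_loc with (f := F (D1 (D2 f))).
    + exists delta. intros u v Hu Hv. rewrite Rminus_0_r in Hu, Hv.
      symmetry; apply is_derive_unique, H12; auto.
    + apply continuity_2d_real_functional; [exact Hsel |].
      apply (holo_cdiff2 U); [apply (holo_D1 U), (holo_D2 U), Hf | apply Hball, ball_center].
  - apply continuity_2d_pt_ext_loc with (f := F (D2 (D1 f))).
    + exists delta. intros u v Hu Hv. rewrite Rminus_0_r in Hu, Hv.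
      symmetry; apply is_derive_unique, H21; auto.
    + apply continuity_2d_real_functional; [exact Hsel |].
      apply (holo_cdiff2 U); [apply (holo_D2 U), (holo_D1 U), Hf | apply Hball, ball_center].
Qed.

End MixedPartials.

Lemma D1_D2_comm (U : C * C -> Prop) (hU : open U) f :
  holo_on U f -> eq_on U (D1 (D2 f)) (D2 (D1 f)).
Proof.
  intros Hf a b Hab. destruct (hU _ Hab) as [delta Hball].
  pose proof (real_slice_Schwarz U hU Re a b delta real_functional_Re Hball f Hf) as Hre.
  pose proof (real_slice_Schwarz U hU Im a b delta real_functional_Im Hball f Hf) as Him.
  unfold real_slice in Hre, Him. rewrite !Cplus_0_r in Hre, Him.
  destruct (D1 (D2 f) a b), (D2 (D1 f) a b). simpl in Hre, Him. subst; reflexivity.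
Qed.

Lemma prodop_aux_snoc F k : forall lo f,
  prodop_aux F lo (S k) f = prodop_aux F lo k (F (lo + k)%nat f).
Proof.
  induction k as [|k IHk]; intros lo f; simpl.
  - rewrite Nat.add_0_r; reflexivity.
  - f_equal. simpl in IHk. rewrite IHk. do 2 f_equal. lia.
Qed.

Lemma prodop_nil F lo hi f : (hi < lo)%nat -> prodop F lo hi f = f.
Proof. intros H. unfold prodop. replace (S hi - lo)%nat with 0%nat by lia. reflexivity. Qed.

Lemma prodop_cons F lo hi f : (lo <= hi)%nat -> prodop F lo hi f = F lo (prodop F (S lo) hi f).
Proof.
  intros H. unfold prodop. replace (S hi - lo)%nat with (S (S hi - S lo)) by lia. reflexivity.
Qed.

Lemma prodop_snoc F lo hi f : (lo <= S hi)%nat ->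
  prodop F lo (S hi) f = prodop F lo hi (F (S hi) f).
Proof.
  intros H. unfold prodop. replace (S (S hi) - lo)%nat with (S (S hi - lo)) by lia.
  rewrite prodop_aux_snoc. do 2 f_equal. lia.
Qed.

Lemma csum_aux_snoc F k : forall lo, csum_aux F lo (S k) = csum_aux F lo k + F (lo + k)%nat.
Proof.
  induction k as [|k IHk]; intros lo.
  - simpl. rewrite Nat.add_0_r. ring.
  - change (F lo + csum_aux F (S lo) (S k) = F lo + csum_aux F (S lo) k + F (lo + S k)%nat).
    rewrite IHk. replace (S lo + k)%nat with (lo + S k)%nat by lia. ring.
Qed.

Lemma csum_nil F lo hi : (hi < lo)%nat -> csum F lo hi = RtoC 0.
Proof. intros H. unfold csum. replace (S hi - lo)%nat with 0%nat by lia. reflexivity. Qed.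

Lemma csum_cons F lo hi : (lo <= hi)%nat -> csum F lo hi = F lo + csum F (S lo) hi.
Proof.
  intros H. unfold csum. replace (S hi - lo)%nat with (S (S hi - S lo)) by lia. reflexivity.
Qed.

Lemma csum_snoc F lo hi : (lo <= S hi)%nat -> csum F lo (S hi) = csum F lo hi + F (S hi).
Proof.
  intros H. unfold csum. replace (S (S hi) - lo)%nat with (S (S hi - lo)) by lia.
  rewrite csum_aux_snoc. do 2 f_equal. lia.
Qed.

Lemma csum_ext F G lo hi : (forall j, (lo <= j <= hi)%nat -> F j = G j) ->
  csum F lo hi = csum G lo hi.
Proof.
  unfold csum. remember (S hi - lo)%nat as k. revert lo Heqk.
  induction k as [|k IHk]; intros lo Hk H; simpl; auto.
  rewrite H by lia. f_equal. apply IHk; [lia | intros; apply H; lia].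
Qed.

Lemma csum_add F G lo hi : csum (fun j => F j + G j) lo hi = csum F lo hi + csum G lo hi.
Proof.
  unfold csum. generalize (S hi - lo)%nat. intros k. revert lo.
  induction k as [|k IHk]; intros lo; simpl; [ring | rewrite IHk; ring].
Qed.

Lemma csum_scal c F lo hi : csum (fun j => c * F j) lo hi = c * csum F lo hi.
Proof.
  unfold csum. generalize (S hi - lo)%nat. intros k. revert lo.
  induction k as [|k IHk]; intros lo; simpl; [ring | rewrite IHk; ring].
Qed.

Lemma csum_opp F lo hi : csum (fun j => - F j) lo hi = - csum F lo hi.
Proof.
  unfold csum. generalize (S hi - lo)%nat. intros k. revert lo.
  induction k as [|k IHk]; intros lo; simpl; [ring | rewrite IHk; ring].
Qed.

Lemma csum_zero F lo hi : (forall j, (lo <= j <= hi)%nat -> F j = RtoC 0) ->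
  csum F lo hi = RtoC 0.
Proof.
  intros H. rewrite (csum_ext F (fun _ => RtoC 0)) by auto. clear H.
  unfold csum. generalize (S hi - lo)%nat. intros k. revert lo.
  induction k as [|k IHk]; intros lo; simpl; [reflexivity | rewrite IHk; ring].
Qed.

Lemma csum_single F lo hi m : (lo <= m <= hi)%nat ->
  (forall j, (lo <= j <= hi)%nat -> j <> m -> F j = RtoC 0) -> csum F lo hi = F m.
Proof.
  intros Hm H. revert H Hm. induction hi as [|hi IHhi]; intros H Hm.
  - assert (lo = 0 /\ m = 0)%nat as [-> ->] by lia.
    rewrite csum_cons, csum_nil by lia. ring.
  - rewrite csum_snoc by lia. destruct (Nat.eq_dec m (S hi)) as [->|Hne].
    + rewrite csum_zero; [ring|]. intros j Hj. apply H; lia.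
    + rewrite IHhi, (H (S hi)) by (lia || (intros; apply H; lia)). ring.
Qed.

Lemma csum_telescope (h : nat -> C) i m : (i <= m)%nat ->
  csum (fun j => h j - h (j - 1)%nat) (S i) m = h m - h i.
Proof.
  induction m as [|m IHm]; intros Him.
  - assert (i = 0)%nat by lia. subst. rewrite csum_nil by lia. ring.
  - destruct (Nat.eq_dec i (S m)) as [->|Hne].
    + rewrite csum_nil by lia. ring.
    + rewrite csum_snoc, IHm by lia. replace (S m - 1)%nat with m by lia. ring.
Qed.

Lemma csum_swap (F : nat -> nat -> C) lo1 hi1 lo2 hi2 :
  csum (fun i => csum (fun j => F i j) lo2 hi2) lo1 hi1 =
  csum (fun j => csum (fun i => F i j) lo1 hi1) lo2 hi2.
Proof.
  unfold csum at 1 4. generalize (S hi1 - lo1)%nat. intros k. revert lo1.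
  induction k as [|k IHk]; intros lo1; simpl.
  - symmetry. apply csum_zero. reflexivity.
  - rewrite IHk, <- csum_add. reflexivity.
Qed.

(** * Polynomials in the Euler operators *)

Inductive poly_in (G : (fn2 -> fn2) -> Prop) : (fn2 -> fn2) -> Prop :=
| poly_gen L : G L -> poly_in G L
| poly_id : poly_in G (fun f => f)
| poly_scal a : poly_in G (fscal a)
| poly_add L K : poly_in G L -> poly_in G K -> poly_in G (fun f => fadd (L f) (K f))
| poly_comp L K : poly_in G L -> poly_in G K -> poly_in G (fun f => L (K f)).

Lemma poly_opc G L a : poly_in G L -> poly_in G (opc L a).
Proof. intros HL. exact (poly_add G L (fscal a) HL (poly_scal G a)). Qed.

Lemma poly_prodop G F lo hi : (forall j, poly_in G (F j)) -> poly_in G (prodop F lo hi).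
Proof.
  intros HF. unfold prodop. generalize (S hi - lo)%nat. intros k. revert lo.
  induction k as [|k IHk]; intros lo; simpl.
  - apply poly_id.
  - apply (poly_comp G (F lo)); auto.
Qed.

Lemma poly_in_mono G G' K : (forall L, G L -> G' L) -> poly_in G K -> poly_in G' K.
Proof. intros HG. induction 1; [apply poly_gen; auto | constructor ..]; assumption. Qed.

Notation euler_poly := (poly_in (fun L => L = delta1 \/ L = delta2)).
Notation delta1_poly := (poly_in (eq delta1)).

Lemma euler_poly_delta1 : euler_poly delta1.
Proof. apply poly_gen; auto. Qed.

Lemma euler_poly_delta2 : euler_poly delta2.
Proof. apply poly_gen; auto. Qed.

Lemma delta1_poly_delta1 : delta1_poly delta1.
Proof. apply poly_gen; reflexivity. Qed.

Lemma delta1_poly_euler_poly K : delta1_poly K -> euler_poly K.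
Proof. apply poly_in_mono. intros L <-. auto. Qed.

Section EulerOperators.
Variable U : C * C -> Prop.
Hypothesis hU : open U.

Local Notation "f == g" := (eq_on U f g) (at level 70).
Local Notation holo := (holo_on U).

Record linear_op (L : fn2 -> fn2) : Prop := {
  linear_op_holo : forall f, holo f -> holo (L f);
  linear_op_eq_on : forall f g, f == g -> L f == L g;
  linear_op_fadd : forall f g, holo f -> holo g -> L (fadd f g) == fadd (L f) (L g);
  linear_op_fscal : forall k f, holo f -> L (fscal k f) == fscal k (L f) }.

Definition commute (L K : fn2 -> fn2) : Prop := forall f, holo f -> L (K f) == K (L f).

Lemma commute_sym L K : commute L K -> commute K L.
Proof. intros H f Hf. apply (eq_on_sym U), H, Hf. Qed.

Lemma linear_op_id : linear_op (fun f => f).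
Proof. split; intros; try apply (eq_on_refl U); auto. Qed.

Lemma linear_op_scal a : linear_op (fscal a).
Proof.
  split.
  - apply (holo_fscal U hU).
  - intros; apply (fscal_eq_on U); auto.
  - intros f g _ _ x y _. unfold fscal, fadd. ring.
  - intros k f _ x y _. unfold fscal. ring.
Qed.

Lemma linear_op_add L K : linear_op L -> linear_op K ->
  linear_op (fun f => fadd (L f) (K f)).
Proof.
  intros [HL1 HL2 HL3 HL4] [HK1 HK2 HK3 HK4]. split.
  - intros; apply (holo_fadd U hU); auto.
  - intros; apply (fadd_eq_on U); auto.
  - intros f g Hf Hg x y h. unfold fadd at 1.
    rewrite (HL3 f g Hf Hg x y h), (HK3 f g Hf Hg x y h). unfold fadd; ring.
  - intros k f Hf x y h. unfold fadd at 1.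
    rewrite (HL4 k f Hf x y h), (HK4 k f Hf x y h). unfold fadd, fscal; ring.
Qed.

Lemma linear_op_comp L K : linear_op L -> linear_op K -> linear_op (fun f => L (K f)).
Proof.
  intros [HL1 HL2 HL3 HL4] [HK1 HK2 HK3 HK4]. split; auto.
  - intros f g Hf Hg. eapply (eq_on_trans U); [apply HL2, HK3 | apply HL3]; auto.
  - intros k f Hf. eapply (eq_on_trans U); [apply HL2, HK4 | apply HL4]; auto.
Qed.

Lemma poly_linear_op G K : (forall L, G L -> linear_op L) -> poly_in G K -> linear_op K.
Proof.
  intros HG. induction 1; auto using linear_op_id, linear_op_scal, linear_op_add,
    linear_op_comp.
Qed.

(* [M] need not preserve holomorphy: it may be the multiplication by an
   arbitrary function of one of the variables. *)
Lemma poly_commute G M K :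
  (forall L, G L -> linear_op L) -> (forall L, G L -> commute L M) ->
  (forall f g, holo f -> holo g -> M (fadd f g) == fadd (M f) (M g)) ->
  (forall k f, holo f -> M (fscal k f) == fscal k (M f)) ->
  poly_in G K -> commute K M.
Proof.
  intros HG HGM HMadd HMscal.
  induction 1 as [L HL| |a|L K HL IHL HK IHK|L K HL IHL HK IHK]; intros f Hf.
  - apply HGM; auto.
  - apply (eq_on_refl U).
  - apply (eq_on_sym U), HMscal, Hf.
  - assert (HL' := poly_linear_op G L HG HL). assert (HK' := poly_linear_op G K HG HK).
    eapply (eq_on_trans U); [apply (fadd_eq_on U); [apply IHL | apply IHK]; exact Hf |].
    apply (eq_on_sym U), HMadd;
      [apply (linear_op_holo _ HL') | apply (linear_op_holo _ HK')]; auto.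
  - assert (HL' := poly_linear_op G L HG HL). assert (HK' := poly_linear_op G K HG HK).
    eapply (eq_on_trans U); [apply (linear_op_eq_on _ HL'), IHK, Hf |].
    apply IHL, (linear_op_holo _ HK'), Hf.
Qed.

Lemma linear_op_delta1 : linear_op delta1.
Proof.
  split.
  - apply (holo_delta1 U hU).
  - intros f g H a b h. unfold delta1. rewrite (D1_eq_on U hU f g H a b h). reflexivity.
  - intros f g Hf Hg a b h. unfold delta1. rewrite (D1_fadd U hU f g Hf Hg a b h).
    unfold fadd. ring.
  - intros k f Hf a b h. unfold delta1. rewrite (D1_fscal U hU k f Hf a b h).
    unfold fscal. ring.
Qed.

Lemma linear_op_delta2 : linear_op delta2.
Proof.
  split.
  - apply (holo_delta2 U hU).
  - intros f g H a b h. unfold delta2. rewrite (D2_eq_on U hU f g H a b h). reflexivity.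
  - intros f g Hf Hg a b h. unfold delta2. rewrite (D2_fadd U hU f g Hf Hg a b h).
    unfold fadd. ring.
  - intros k f Hf a b h. unfold delta2. rewrite (D2_fscal U hU k f Hf a b h).
    unfold fscal. ring.
Qed.

Lemma delta1_delta2_comm : commute delta1 delta2.
Proof.
  intros f Hf a b h. unfold delta1, delta2.
  rewrite (D1_mul_t2 U hU (fun t => t - 1) (D2 f) (holo_D2 U f Hf) a b h),
          (D2_mul_t1 U hU (fun t => t) (D1 f) (holo_D1 U f Hf) a b h),
          (D1_D2_comm U hU f Hf a b h).
  ring.
Qed.

Lemma euler_generator_linear L : L = delta1 \/ L = delta2 -> linear_op L.
Proof. intros [-> | ->]; auto using linear_op_delta1, linear_op_delta2. Qed.

Lemma euler_poly_linear K : euler_poly K -> linear_op K.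
Proof. apply poly_linear_op, euler_generator_linear. Qed.

Lemma euler_poly_commute K L : euler_poly K -> euler_poly L -> commute K L.
Proof.
  intros HK HL. assert (HL' := euler_poly_linear L HL).
  apply (poly_commute _ L K euler_generator_linear); auto using linear_op_fadd, linear_op_fscal.
  intros g Hg. assert (Hg' := euler_generator_linear g Hg).
  apply commute_sym, (poly_commute _ g L euler_generator_linear);
    auto using linear_op_fadd, linear_op_fscal.
  intros g' Hg''. destruct Hg as [-> | ->], Hg'' as [-> | ->];
    auto using delta1_delta2_comm, commute_sym; intros f _; apply (eq_on_refl U).
Qed.

Definition mul_t1 (psi : C -> C) (f : fn2) : fn2 := fun a b => psi a * f a b.
Definition mul_t2 (psi : C -> C) (f : fn2) : fn2 := fun a b => psi b * f a b.

Lemma delta1_poly_mul_t2 psi K : delta1_poly K -> commute K (mul_t2 psi).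
Proof.
  apply poly_commute.
  - intros L <-. apply linear_op_delta1.
  - intros L <- f Hf a b h. unfold delta1, mul_t2.
    rewrite (D1_mul_t2 U hU psi f Hf a b h). ring.
  - intros f g _ _ a b _. unfold mul_t2, fadd. ring.
  - intros k f _ a b _. unfold mul_t2, fscal. ring.
Qed.

Lemma delta2_poly_mul_t1 psi K : poly_in (eq delta2) K -> commute K (mul_t1 psi).
Proof.
  apply poly_commute.
  - intros L <-. apply linear_op_delta2.
  - intros L <- f Hf a b h. unfold delta2, mul_t1.
    rewrite (D2_mul_t1 U hU psi f Hf a b h). ring.
  - intros f g _ _ a b _. unfold mul_t1, fadd. ring.
  - intros k f _ a b _. unfold mul_t1, fscal. ring.
Qed.

Lemma euler_poly_holo K f : euler_poly K -> holo f -> holo (K f).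
Proof. intros HK. apply linear_op_holo, euler_poly_linear, HK. Qed.

Lemma euler_poly_eq_on K f g : euler_poly K -> f == g -> K f == K g.
Proof. intros HK. apply linear_op_eq_on, euler_poly_linear, HK. Qed.

Lemma euler_poly_fadd K f g a b : euler_poly K -> holo f -> holo g -> U (a, b) ->
  K (fadd f g) a b = K f a b + K g a b.
Proof. intros HK Hf Hg h. apply (linear_op_fadd _ (euler_poly_linear K HK)); auto. Qed.

Lemma euler_poly_fscal K k f a b : euler_poly K -> holo f -> U (a, b) ->
  K (fscal k f) a b = k * K f a b.
Proof. intros HK Hf h. apply (linear_op_fscal _ (euler_poly_linear K HK)); auto. Qed.

Lemma euler_poly_opc K L c f a b : euler_poly K -> euler_poly L -> holo f -> U (a, b) ->
  K (opc L c f) a b = K (L f) a b + c * K f a b.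
Proof.
  intros HK HL Hf h. assert (HK' := euler_poly_linear K HK).
  change (opc L c f) with (fadd (L f) (fscal c f)).
  rewrite (linear_op_fadd _ HK'); [| apply euler_poly_holo | apply (holo_fscal U hU) |]; auto.
  unfold fadd. rewrite (linear_op_fscal _ HK'); auto.
Qed.

Lemma euler_poly_comm K L f a b : euler_poly K -> euler_poly L -> holo f -> U (a, b) ->
  K (L f) a b = L (K f) a b.
Proof. intros HK HL Hf h. apply (euler_poly_commute K L); auto. Qed.

End EulerOperators.

#[export] Hint Resolve holo_delta1 holo_delta2 holo_fscal holo_fadd euler_poly_holo : euler.

Section MatrixVector.
Variables (n : nat) (v : nat -> C).

Definition mat_vec (M : mat) (k : nat) : C := csum (fun j => M k j * v j) 0 (2 * n).

Lemma mat_vec_madd A B k : mat_vec (madd A B) k = mat_vec A k + mat_vec B k.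
Proof. unfold mat_vec, madd. rewrite <- csum_add. apply csum_ext; intros; ring. Qed.

Lemma mat_vec_mscal c A k : mat_vec (mscal c A) k = c * mat_vec A k.
Proof. unfold mat_vec, mscal. rewrite <- csum_scal. apply csum_ext; intros; ring. Qed.

Lemma mat_vec_mopp A k : mat_vec (mopp A) k = - mat_vec A k.
Proof. unfold mat_vec, mopp. rewrite <- csum_opp. apply csum_ext; intros; ring. Qed.

Lemma mat_vec_msum F lo hi k :
  mat_vec (msum F lo hi) k = csum (fun i => mat_vec (F i) k) lo hi.
Proof.
  unfold mat_vec, msum. rewrite csum_swap. apply csum_ext. intros j _.
  rewrite Cmult_comm, <- csum_scal. apply csum_ext; intros; ring.
Qed.

Lemma mat_vec_E a b k : (b <= 2 * n)%nat ->
  mat_vec (E a b) k = if Nat.eqb k a then v b else RtoC 0.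
Proof.
  intros Hb. unfold mat_vec, E. destruct (Nat.eqb_spec k a) as [->|Hne]; simpl.
  - rewrite (csum_single _ 0 (2 * n) b); [rewrite Nat.eqb_refl; simpl; ring | lia |].
    intros j _ Hj. destruct (Nat.eqb_spec j b) as [|Hn]; [contradiction | simpl; ring].
  - apply csum_zero. intros j _. ring.
Qed.

Lemma mat_vec_msum_single F lo hi m k : (lo <= m <= hi)%nat ->
  (forall i, (lo <= i <= hi)%nat -> i <> m -> mat_vec (F i) k = RtoC 0) ->
  mat_vec (msum F lo hi) k = mat_vec (F m) k.
Proof. intros Hm H. rewrite mat_vec_msum. apply (csum_single (fun i => mat_vec (F i) k)); auto. Qed.

Lemma mat_vec_msum_zero F lo hi k :
  (forall i, (lo <= i <= hi)%nat -> mat_vec (F i) k = RtoC 0) ->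
  mat_vec (msum F lo hi) k = RtoC 0.
Proof. intros H. rewrite mat_vec_msum. apply csum_zero; auto. Qed.

Lemma mat_vec_msum_ext F G lo hi k :
  (forall i, (lo <= i <= hi)%nat -> mat_vec (F i) k = G i) ->
  mat_vec (msum F lo hi) k = csum G lo hi.
Proof. intros H. rewrite mat_vec_msum. apply csum_ext; auto. Qed.

Lemma csum_pfaff_split_t1 (M1 M2 M3 : mat) d1 d2 d3 k :
  csum (fun j => (M1 k j / d1 + M2 k j / d2 + M3 k j / d3) * v j) 0 (2 * n)
  = mat_vec M1 k / d1 + mat_vec M2 k / d2 + mat_vec M3 k / d3.
Proof.
  unfold mat_vec, Cdiv.
  rewrite (csum_ext _ (fun j => / d1 * (M1 k j * v j) + / d2 * (M2 k j * v j)
                                + / d3 * (M3 k j * v j))) by (intros; ring).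
  rewrite !csum_add, !csum_scal. ring.
Qed.

Lemma csum_pfaff_split_t2 (M1 M2 M3 : mat) d1 d2 d3 k :
  csum (fun j => (- M1 k j / d1 + M2 k j / d2 + M3 k j / d3) * v j) 0 (2 * n)
  = - mat_vec M1 k / d1 + mat_vec M2 k / d2 + mat_vec M3 k / d3.
Proof.
  unfold mat_vec, Cdiv.
  rewrite (csum_ext _ (fun j => - / d1 * (M1 k j * v j) + / d2 * (M2 k j * v j)
                                + / d3 * (M3 k j * v j))) by (intros; ring).
  rewrite !csum_add, !csum_scal. ring.
Qed.

End MatrixVector.

Ltac nat_eqb_cases := repeat match goal with |- context [Nat.eqb ?x ?y] =>
  destruct (Nat.eqb_spec x y); try (exfalso; lia) end.

Ltac mat_vec_simpl :=
  repeat first [ rewrite mat_vec_madd | rewrite mat_vec_mscal | rewrite mat_vec_mopp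
               | rewrite mat_vec_E by lia
               | rewrite mat_vec_msum_zero by (intros; mat_vec_simpl) ];
  nat_eqb_cases; try ring.

Ltac msum_single m := rewrite (mat_vec_msum_single _ _ _ 1 _ m) by (try lia; intros; mat_vec_simpl).

Ltac msum_eval G :=
  rewrite (mat_vec_msum_ext _ _ _ G) by
    (intros; rewrite ?mat_vec_mscal, mat_vec_E by lia; nat_eqb_cases; reflexivity).

Section CoefficientRows.
Variables (n : nat) (v : nat -> C) (th2 th3 : C) (ka rho : nat -> C).

Local Notation mat_vec := (mat_vec n v).
Local Notation kr := (kr ka rho).

Lemma A11_row_0 : mat_vec (A11 n th3 ka rho) 0 = th3 * v 0%nat + csum v 1 n.
Proof. unfold A11. mat_vec_simpl. msum_eval v. mat_vec_simpl. Qed.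

Lemma A11_row_w m : (1 <= m <= n)%nat ->
  mat_vec (A11 n th3 ka rho) m = kr m * (th3 * v 0%nat + csum v 1 n).
Proof.
  intros Hm. unfold A11. mat_vec_simpl. msum_single m. mat_vec_simpl.
  msum_eval (fun j => kr m * v j). rewrite csum_scal. mat_vec_simpl.
Qed.

Lemma A11_row_w' m : (1 <= m <= n)%nat -> mat_vec (A11 n th3 ka rho) (n + m) = RtoC 0.
Proof. intros Hm. unfold A11. mat_vec_simpl. Qed.

Lemma A01_row_0 : mat_vec (A01 n ka rho) 0 =
  (ka 0%nat + rho 1%nat) * v 0%nat - csum v 1 n - csum (fun j => v (n + j)%nat) 1 n.
Proof.
  unfold A01. mat_vec_simpl. msum_eval v. msum_eval (fun j => v (n + j)%nat). mat_vec_simpl.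
Qed.

Lemma A01_row_w m : (1 <= m <= n)%nat -> mat_vec (A01 n ka rho) m =
  (rho 1%nat - rho m) * v m - kr m * csum v (S m) n.
Proof.
  intros Hm. unfold A01. mat_vec_simpl. msum_single m. mat_vec_simpl.
  msum_eval (fun j => kr m * v j). rewrite csum_scal. mat_vec_simpl.
Qed.

Lemma A01_row_w' m : (1 <= m <= n)%nat -> mat_vec (A01 n ka rho) (n + m) =
  (rho 1%nat - rho m) * v (n + m)%nat - kr m * csum (fun j => v (n + j)%nat) (S m) n.
Proof.
  intros Hm. unfold A01. mat_vec_simpl. msum_single m. mat_vec_simpl.
  msum_eval (fun j => kr m * v (n + j)%nat). rewrite csum_scal. mat_vec_simpl.
Qed.

Lemma At_row_0 : mat_vec (At n th2 ka rho) 0 = th2 * v 0%nat + csum (fun j => v (n + j)%nat) 1 n.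
Proof. unfold At. mat_vec_simpl. msum_eval (fun j => v (n + j)%nat). mat_vec_simpl. Qed.

Lemma At_row_w m : (1 <= m <= n)%nat -> mat_vec (At n th2 ka rho) m = RtoC 0.
Proof. intros Hm. unfold At. mat_vec_simpl. Qed.

Lemma At_row_w' m : (1 <= m <= n)%nat -> mat_vec (At n th2 ka rho) (n + m) =
  kr m * (th2 * v 0%nat + csum (fun j => v (n + j)%nat) 1 n).
Proof.
  intros Hm. unfold At. mat_vec_simpl. msum_single m. mat_vec_simpl.
  msum_eval (fun j => kr m * v (n + j)%nat). rewrite csum_scal. mat_vec_simpl.
Qed.

Lemma A12_row_0 : mat_vec (A12 n th2 th3) 0 = RtoC 0.
Proof. unfold A12. mat_vec_simpl. Qed.

Lemma A12_row_w m : (1 <= m <= n)%nat ->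
  mat_vec (A12 n th2 th3) m = th2 * v m - th3 * v (n + m)%nat.
Proof. intros Hm. unfold A12. mat_vec_simpl. msum_single m. mat_vec_simpl. Qed.

Lemma A12_row_w' m : (1 <= m <= n)%nat ->
  mat_vec (A12 n th2 th3) (n + m) = - th2 * v m + th3 * v (n + m)%nat.
Proof. intros Hm. unfold A12. mat_vec_simpl. msum_single m. mat_vec_simpl. Qed.

Lemma A02_row_0 : mat_vec (A02 n th2 ka rho) 0 = RtoC 0.
Proof. unfold A02. mat_vec_simpl. Qed.

Lemma A02_row_w m : (1 <= m <= n)%nat -> mat_vec (A02 n th2 ka rho) m = RtoC 0.
Proof. intros Hm. unfold A02. mat_vec_simpl. Qed.

Lemma A02_row_w' m : (1 <= m <= n)%nat -> mat_vec (A02 n th2 ka rho) (n + m) =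
  - th2 * kr m * v 0%nat + th2 * v m - kr m * csum (fun j => v (n + j)%nat) 1 (m - 1)
  + (th2 + ka 0%nat - ka m) * v (n + m)%nat.
Proof.
  intros Hm. unfold A02. msum_single m. mat_vec_simpl.
  msum_eval (fun j => kr m * v (n + j)%nat). rewrite csum_scal. mat_vec_simpl.
Qed.

End CoefficientRows.

(** * The operators [Xop i], [Yop i], [Mop i] and their telescoping sums *)

Section Operators.
Variable U : C * C -> Prop.
Hypothesis hU : open U.
Variables (n : nat) (ka rho : nat -> C).

Local Notation holo := (holo_on U).
Local Notation Bop := (Bop ka rho).
Local Notation Cop := (Cop ka rho).
Local Notation kr := (kr ka rho).

Definition Bprod lo hi := prodop Bop lo hi.
Definition Cprod lo hi := prodop Cop lo hi.

(* [Xop i] is [prod_(j > i) (delta1 + b_j) prod_(j < i) (delta1 + c_j - 1)] of the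
   theorem; [w_i] and [w'_i] are multiples of [Mop i z] and [Mop i ((delta2 + b') z)]. *)
Definition Xop i g := Bprod (S i) n (Cprod 1 (i - 1) g).
Definition Yop i g := Bprod (S i) n (Cprod 1 i g).
Definition Mop i g := Xop i (if Nat.eqb i 1 then Cop 1 g else delta1 g).

Lemma delta1_poly_Bop j : delta1_poly (Bop j).
Proof. apply poly_opc, delta1_poly_delta1. Qed.

Lemma delta1_poly_Cop j : delta1_poly (Cop j).
Proof. apply poly_opc, delta1_poly_delta1. Qed.

Lemma delta1_poly_Bprod lo hi : delta1_poly (Bprod lo hi).
Proof. apply poly_prodop, delta1_poly_Bop. Qed.

Lemma delta1_poly_Cprod lo hi : delta1_poly (Cprod lo hi).
Proof. apply poly_prodop, delta1_poly_Cop. Qed.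

Lemma delta1_poly_Xop i : delta1_poly (Xop i).
Proof. apply (poly_comp _ (Bprod _ _)); [apply delta1_poly_Bprod | apply delta1_poly_Cprod]. Qed.

Lemma delta1_poly_Yop i : delta1_poly (Yop i).
Proof. apply (poly_comp _ (Bprod _ _)); [apply delta1_poly_Bprod | apply delta1_poly_Cprod]. Qed.

Lemma delta1_poly_Mop i : delta1_poly (Mop i).
Proof.
  unfold Mop. apply (poly_comp _ (Xop i)); [apply delta1_poly_Xop|].
  destruct (Nat.eqb i 1); [apply delta1_poly_Cop | apply delta1_poly_delta1].
Qed.

#[local] Hint Resolve delta1_poly_Bop delta1_poly_Cop delta1_poly_Bprod delta1_poly_Cprod
  delta1_poly_Xop delta1_poly_Yop delta1_poly_Mop delta1_poly_delta1 delta1_poly_euler_poly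
  euler_poly_delta1 euler_poly_delta2 poly_opc poly_prodop poly_comp : euler.

Lemma c_ne1 i : i <> 1%nat -> c_ ka rho i = - rho 1%nat + rho i + 1.
Proof. intros H. unfold c_. destruct (Nat.eqb_spec i 1); [contradiction | reflexivity]. Qed.

Lemma Mop_ne1 i g : i <> 1%nat -> Mop i g = Xop i (delta1 g).
Proof. intros H. unfold Mop. destruct (Nat.eqb_spec i 1); [contradiction | reflexivity]. Qed.

Lemma Mop_1 g : Mop 1 g = Yop 1 g.
Proof. reflexivity. Qed.

Lemma Yop_Cop i g a b : (1 <= i <= n)%nat -> holo g -> U (a, b) ->
  Yop i g a b = Cop i (Xop i g) a b.
Proof.
  intros Hi Hg Hab. unfold Yop, Xop, Cprod.
  replace i with (S (i - 1)) at 2 by lia. rewrite prodop_snoc by lia.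
  replace (S (i - 1)) with i by lia.
  apply (euler_poly_comm U hU (Xop i) (Cop i)); auto with euler.
Qed.

Lemma Yop_pred i g : (1 <= i <= n)%nat -> Yop (i - 1) g = Bop i (Xop i g).
Proof.
  intros Hi. unfold Yop, Xop, Bprod.
  replace (S (i - 1)) with i by lia. rewrite prodop_cons by lia. reflexivity.
Qed.

Lemma Yop_n g : Yop n g = Cprod 1 n g.
Proof. unfold Yop, Bprod. rewrite prodop_nil by lia. reflexivity. Qed.

Lemma Bprod_Xop1 g : (1 <= n)%nat -> Bprod 1 n g = Bop 1 (Xop 1 g).
Proof. intros Hn. unfold Bprod. rewrite prodop_cons by lia. reflexivity. Qed.

(* [Cop j - Bop j = kr j] for [j >= 2]. *)
Lemma kr_Xop j g a b : (2 <= j <= n)%nat -> holo g -> U (a, b) ->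
  kr j * Xop j g a b = Yop j g a b - Yop (j - 1) g a b.
Proof.
  intros Hj Hg Hab. rewrite Yop_Cop, Yop_pred by (auto; lia).
  unfold Defs.Cop, Defs.Bop, opc, b_, Defs.kr. rewrite c_ne1 by lia. ring.
Qed.

Lemma csum_kr_Mop i m g a b : (1 <= i)%nat -> (i <= m <= n)%nat -> holo g -> U (a, b) ->
  csum (fun j => kr j * Mop j g a b) (S i) m = Yop m (delta1 g) a b - Yop i (delta1 g) a b.
Proof.
  intros Hi Hm Hg Hab. rewrite <- (csum_telescope (fun j => Yop j (delta1 g) a b)) by lia.
  apply csum_ext. intros j Hj. rewrite Mop_ne1 by lia.
  apply kr_Xop; auto with euler; lia.
Qed.

Lemma Bprod_Cop1 g a b : (1 <= n)%nat -> holo g -> U (a, b) ->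
  Bprod 1 n (Cop 1 g) a b = Yop 1 (delta1 g) a b - kr 1 * Yop 1 g a b.
Proof.
  intros Hn Hg Hab. rewrite Bprod_Xop1 by exact Hn.
  set (L := fun h => Xop 1 (Cop 1 h)).
  assert (HL : euler_poly L)
    by (apply delta1_poly_euler_poly, (poly_comp _ (Xop 1)); auto with euler).
  change (Bop 1 (L g) a b = L (delta1 g) a b - kr 1 * L g a b).
  rewrite <- (euler_poly_comm U hU L (Bop 1)) by auto with euler.
  unfold Defs.Bop. rewrite (euler_poly_opc U hU L delta1) by auto with euler.
  unfold Defs.kr, b_. ring.
Qed.

Lemma delta1_Mop_row i g a b : (1 <= i <= n)%nat -> holo g -> U (a, b) ->
  delta1 (Mop i g) a b + (rho i - rho 1%nat) * Mop i g a b
  + csum (fun j => kr j * Mop j g a b) (S i) n = delta1 (Cprod 1 n g) a b.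
Proof.
  intros Hi Hg Hab. rewrite csum_kr_Mop, Yop_n by (auto; lia).
  rewrite (euler_poly_comm U hU delta1 (Cprod 1 n)) by auto with euler.
  enough (E : delta1 (Mop i g) a b + (rho i - rho 1%nat) * Mop i g a b = Yop i (delta1 g) a b)
    by (rewrite E; ring).
  destruct (Nat.eq_dec i 1) as [->|Hne].
  - rewrite Mop_1, (euler_poly_comm U hU delta1 (Yop 1)) by auto with euler. ring.
  - rewrite Mop_ne1, Yop_Cop by (auto with euler; lia).
    unfold Defs.Cop, opc. rewrite c_ne1 by exact Hne. ring.
Qed.

Lemma csum_kr_Mop_all g a b : (1 <= n)%nat -> holo g -> U (a, b) ->
  csum (fun j => kr j * Mop j g a b) 1 n = delta1 (Cprod 1 n g) a b - Cop 1 (Bprod 1 n g) a b.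
Proof.
  intros Hn Hg Hab. rewrite csum_cons, csum_kr_Mop, Yop_n, Mop_1 by (auto; lia).
  rewrite (euler_poly_comm U hU delta1 (Cprod 1 n)),
          <- (euler_poly_comm U hU (Bprod 1 n) (Cop 1)) by auto with euler.
  rewrite Bprod_Cop1 by auto. ring.
Qed.

Lemma csum_kr_Mop_below i g a b : (1 <= i <= n)%nat -> holo g -> U (a, b) ->
  csum (fun j => kr j * Mop j g a b) 1 (i - 1)
  = Mop i (Cop 1 g) a b + (ka 0%nat - ka i) * Mop i g a b - Bprod 1 n (Cop 1 g) a b.
Proof.
  intros Hi Hg Hab. destruct (Nat.eq_dec i 1) as [->|Hne].
  - rewrite csum_nil, Bprod_Xop1 by lia.
    change (Mop 1 (Cop 1 g)) with (Xop 1 (Cop 1 (Cop 1 g))).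
    change (Mop 1 g) with (Xop 1 (Cop 1 g)).
    rewrite (euler_poly_comm U hU (Xop 1) (Cop 1)) by auto with euler.
    unfold Defs.Bop, Defs.Cop, opc, b_, c_. simpl. ring.
  - rewrite csum_cons, csum_kr_Mop, Mop_1 by (auto; lia).
    rewrite Bprod_Cop1 by (auto; lia).
    rewrite Yop_pred, !Mop_ne1 by (auto; lia).
    set (L := fun h => Xop i (delta1 h)).
    assert (HL : euler_poly L)
      by (apply delta1_poly_euler_poly, (poly_comp _ (Xop i)); auto with euler).
    change (Xop i (delta1 (Cop 1 g)) a b) with (L (Cop 1 g) a b).
    rewrite (euler_poly_comm U hU L (Cop 1)) by auto with euler.
    unfold L, Defs.Bop, Defs.Cop, opc, b_, c_. simpl. ring.
Qed.

End Operators.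

#[export] Hint Resolve delta1_poly_Bop delta1_poly_Cop delta1_poly_Bprod delta1_poly_Cprod
  delta1_poly_Xop delta1_poly_Yop delta1_poly_Mop delta1_poly_delta1 delta1_poly_euler_poly
  euler_poly_delta1 euler_poly_delta2 poly_opc poly_prodop poly_comp : euler.

(** * The vector [w] and its logarithmic derivatives *)

Section Pfaff.
Variable U : C * C -> Prop.
Hypothesis hU : open U.
Variables (n : nat) (th2 th3 : C) (ka rho : nat -> C) (z : fn2).
Hypothesis hn : (1 <= n)%nat.
Hypothesis hz : holo_on U z.
Hypothesis hE1 : forall t1 t2, U (t1, t2) -> eq1 n th2 th3 ka rho z t1 t2 = RtoC 0.
Hypothesis hE2 : forall t1 t2, U (t1, t2) -> eq2 th2 th3 ka rho z t1 t2 = RtoC 0.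

Local Notation "f == g" := (eq_on U f g) (at level 70).
Local Notation holo := (holo_on U).
Local Notation w := (wvec n th2 th3 ka rho z).
Local Notation Cop := (Cop ka rho).
Local Notation kr := (kr ka rho).
Local Notation P := (Bprod ka rho 1 n).
Local Notation Q := (Cprod ka rho 1 n).
Local Notation Mop := (Mop n ka rho).

Definition zt := opc delta2 (b' th2) z.
Definition zc := opc delta2 (c' th2 th3 - 1) z.
Definition Sop := opc (fun f => fadd (delta1 f) (delta2 f)) (c_ ka rho 1 + c' th2 th3 - 2).

Lemma euler_poly_Sop : euler_poly Sop.
Proof. apply poly_opc, poly_add; auto with euler. Qed.

Lemma holo_zt : holo zt.
Proof. apply (euler_poly_holo U hU (opc delta2 _)); auto with euler. Qed.

Lemma holo_zc : holo zc.
Proof. apply (euler_poly_holo U hU (opc delta2 _)); auto with euler. Qed.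

#[local] Hint Resolve euler_poly_Sop holo_zt holo_zc hz : euler.

Lemma w_0 : w 0 = fscal (-1) (P zc).
Proof. reflexivity. Qed.

Lemma w_row i : (1 <= i <= n)%nat -> w i = fscal (kr i * th3) (Mop i z).
Proof.
  intros Hi. unfold wvec.
  destruct (Nat.eqb_spec i 0) as [|_]; [lia|].
  destruct (Nat.eqb_spec i 1) as [->|Hne].
  - f_equal. unfold b_, b', c', Defs.kr. ring.
  - destruct (Nat.leb_spec i n) as [_|]; [|lia].
    rewrite (Mop_ne1 n ka rho i z Hne). f_equal.
    rewrite (c_ne1 ka rho i Hne). unfold b_, b', c', Defs.kr. ring.
Qed.

Lemma w'_row i : (1 <= i <= n)%nat -> w (n + i) = fscal (- kr i) (Mop i zt).
Proof.
  intros Hi. unfold wvec.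
  destruct (Nat.eqb_spec (n + i) 0) as [|_]; [lia|].
  destruct (Nat.eqb_spec (n + i) 1) as [|_]; [lia|].
  destruct (Nat.leb_spec (n + i) n) as [|_]; [lia|].
  destruct (Nat.eqb_spec (n + i) (S n)) as [He|Hne].
  - assert (i = 1%nat) by lia. subst i. f_equal. unfold b_, Defs.kr. ring.
  - replace (n + i - n)%nat with i by lia.
    rewrite (Mop_ne1 n ka rho i zt ltac:(lia)). f_equal.
    rewrite (c_ne1 ka rho i ltac:(lia)). unfold b_, Defs.kr. ring.
Qed.

Lemma holo_w k : holo (w k).
Proof.
  unfold wvec. repeat match goal with |- context [if ?c then _ else _] => destruct c end;
    repeat first [ exact hz | apply (holo_fscal U hU)
                 | apply (euler_poly_holo U hU); [auto with euler |] ].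
Qed.

Lemma eq1_at a b : U (a, b) -> a * Sop (P z) a b = delta1 (Q z) a b.
Proof. intros Hab. apply Cminus_eq_0, (hE1 a b Hab). Qed.

Lemma eq2_at a b : U (a, b) -> (1 - b) * Sop zt a b = delta2 zc a b.
Proof. intros Hab. apply Cminus_eq_0, (hE2 a b Hab). Qed.

Lemma csum_w a b : U (a, b) ->
  csum (fun j => w j a b) 1 n = th3 * (delta1 (Q z) a b - Cop 1 (P z) a b).
Proof.
  intros Hab. rewrite (csum_ext _ (fun j => th3 * (kr j * Mop j z a b)))
    by (intros j Hj; rewrite w_row by lia; unfold fscal; ring).
  rewrite csum_scal, (csum_kr_Mop_all U hU); auto.
Qed.

Lemma csum_w' a b : U (a, b) ->
  csum (fun j => w (n + j)%nat a b) 1 n = - (delta1 (Q zt) a b - Cop 1 (P zt) a b).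
Proof.
  intros Hab. rewrite (csum_ext _ (fun j => - (kr j * Mop j zt a b)))
    by (intros j Hj; rewrite w'_row by lia; unfold fscal; ring).
  rewrite csum_opp, (csum_kr_Mop_all U hU); auto with euler.
Qed.

Lemma delta1_w_row i a b : (1 <= i <= n)%nat -> U (a, b) ->
  delta1 (w i) a b + (rho i - rho 1%nat) * w i a b + kr i * csum (fun j => w j a b) (S i) n
  = kr i * th3 * delta1 (Q z) a b.
Proof.
  intros Hi Hab. rewrite (csum_ext _ (fun j => th3 * (kr j * Mop j z a b)))
    by (intros j Hj; rewrite w_row by lia; unfold fscal; ring).
  rewrite csum_scal, (w_row i Hi), (euler_poly_fscal U hU delta1) by auto with euler.
  unfold fscal. rewrite <- (delta1_Mop_row U hU n ka rho i z a b) by auto. ring.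
Qed.

Lemma delta1_w'_row i a b : (1 <= i <= n)%nat -> U (a, b) ->
  delta1 (w (n + i)%nat) a b + (rho i - rho 1%nat) * w (n + i)%nat a b
  + kr i * csum (fun j => w (n + j)%nat a b) (S i) n = - kr i * delta1 (Q zt) a b.
Proof.
  intros Hi Hab. rewrite (csum_ext _ (fun j => - (kr j * Mop j zt a b)))
    by (intros j Hj; rewrite w'_row by lia; unfold fscal; ring).
  rewrite csum_opp, (w'_row i Hi), (euler_poly_fscal U hU delta1) by auto with euler.
  unfold fscal. rewrite <- (delta1_Mop_row U hU n ka rho i zt a b) by auto with euler. ring.
Qed.

Lemma Sop_P_z a b : U (a, b) -> Sop (P z) a b = P zc a b + Cop 1 (P z) a b.
Proof.
  intros Hab.
  rewrite (euler_poly_comm U hU Sop P), (euler_poly_comm U hU (Cop 1) P),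
    <- (euler_poly_fadd U hU P) by auto with euler.
  apply (euler_poly_eq_on U hU P); auto with euler.
  intros x y _. unfold Sop, zc, Defs.Cop, opc, fadd. ring.
Qed.

Lemma delta1_Q_zt a b : U (a, b) -> delta1 (Q zt) a b = a * Sop (P zt) a b.
Proof.
  intros Hab. unfold zt.
  transitivity (opc delta2 (b' th2) (delta1 (Q z)) a b).
  { apply (euler_poly_comm U hU (fun h => delta1 (Q h)) (opc delta2 (b' th2)));
      auto with euler. }
  transitivity (opc delta2 (b' th2) (mul_t1 (fun x => x) (Sop (P z))) a b).
  { apply (euler_poly_eq_on U hU); auto with euler. intros x y h. symmetry. apply eq1_at, h. }
  rewrite (delta2_poly_mul_t1 U hU (fun x => x) (opc delta2 (b' th2)))
    by first [apply poly_opc, poly_gen; reflexivity | auto with euler].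
  unfold mul_t1. f_equal.
  apply (euler_poly_comm U hU (opc delta2 (b' th2)) (fun h => Sop (P h))); auto with euler.
Qed.

Lemma t2_Sop_zt : (fun a b => b * Sop zt a b) == fadd (Cop 1 zt) (fscal (- th2) zc).
Proof.
  intros a b Hab.
  replace (b * Sop zt a b) with (Sop zt a b - (1 - b) * Sop zt a b) by ring.
  assert (Hzt : delta2 zt a b = delta2 (delta2 z) a b + b' th2 * delta2 z a b)
    by (apply (euler_poly_opc U hU delta2 delta2); auto with euler).
  assert (Hzc : delta2 zc a b = delta2 (delta2 z) a b + (c' th2 th3 - 1) * delta2 z a b)
    by (apply (euler_poly_opc U hU delta2 delta2); auto with euler).
  rewrite eq2_at by exact Hab. unfold Sop, Defs.Cop, opc, fadd, fscal.
  rewrite Hzt, Hzc. unfold zt, zc, opc, b', c'. ring.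
Qed.

Lemma delta1_poly_t2_Sop_zt L a b : delta1_poly L -> U (a, b) ->
  b * L (Sop zt) a b = L (Cop 1 zt) a b - th2 * L zc a b.
Proof.
  intros HL Hab.
  transitivity (L (mul_t2 (fun y => y) (Sop zt)) a b).
  { symmetry. apply (delta1_poly_mul_t2 U hU); auto with euler. }
  unfold mul_t2. rewrite (euler_poly_eq_on U hU L _ _ ltac:(auto with euler) t2_Sop_zt a b Hab).
  rewrite (euler_poly_fadd U hU L), (euler_poly_fscal U hU L) by auto with euler. ring.
Qed.

Lemma delta1_poly_delta2_zc L a b : delta1_poly L -> U (a, b) ->
  L (delta2 zc) a b = (1 - b) * L (Sop zt) a b.
Proof.
  intros HL Hab.
  transitivity (L (mul_t2 (fun y => 1 - y) (Sop zt)) a b).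
  { apply (euler_poly_eq_on U hU); auto with euler. intros x y h. symmetry. apply eq2_at, h. }
  apply (delta1_poly_mul_t2 U hU); auto with euler.
Qed.

Lemma Cop1_P_zt a b : U (a, b) -> Cop 1 (P zt) a b = b * Sop (P zt) a b + th2 * P zc a b.
Proof.
  intros Hab.
  rewrite (euler_poly_comm U hU Sop P), (euler_poly_comm U hU (Cop 1) P) by auto with euler.
  rewrite (delta1_poly_t2_Sop_zt P) by auto with euler. ring.
Qed.

Lemma delta1_w_0 a b : U (a, b) ->
  delta1 (w 0%nat) a b = (ka 0%nat + rho 1%nat) * w 0%nat a b
    + th3 * Cop 1 (P z) a b - Cop 1 (P zt) a b.
Proof.
  intros Hab. rewrite w_0, (euler_poly_fscal U hU delta1) by auto with euler. unfold fscal.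
  set (L := fun h => Cop 1 (P h)).
  assert (HL : euler_poly L) by (unfold L; auto with euler).
  change (Cop 1 (P z) a b) with (L z a b). change (Cop 1 (P zt) a b) with (L zt a b).
  replace (delta1 (P zc) a b) with (L zc a b - (c_ ka rho 1 - 1) * P zc a b)
    by (unfold L, Defs.Cop, opc; ring).
  unfold zc, zt. rewrite !(euler_poly_opc U hU L delta2) by auto with euler.
  unfold c_, b', c'. simpl. ring.
Qed.

Lemma delta1_Q_z a b : U (a, b) -> delta1 (Q z) a b = a * (Cop 1 (P z) a b - w 0%nat a b).
Proof.
  intros Hab. rewrite <- eq1_at, Sop_P_z, w_0 by exact Hab. unfold fscal. ring.
Qed.

Lemma Cop1_P_zt_w_0 a b : U (a, b) ->
  Cop 1 (P zt) a b = b * Sop (P zt) a b - th2 * w 0%nat a b.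
Proof. intros Hab. rewrite Cop1_P_zt, w_0 by exact Hab. unfold fscal. ring. Qed.

Lemma csum_w'_w_0 a b : U (a, b) ->
  th2 * w 0%nat a b + csum (fun j => w (n + j)%nat a b) 1 n = - (a - b) * Sop (P zt) a b.
Proof.
  intros Hab. rewrite csum_w', w_0, delta1_Q_zt, Cop1_P_zt by exact Hab. unfold fscal. ring.
Qed.

Lemma delta2_w_0 a b : U (a, b) -> delta2 (w 0%nat) a b = (b - 1) * Sop (P zt) a b.
Proof.
  intros Hab.
  rewrite w_0, (euler_poly_fscal U hU delta2), (euler_poly_comm U hU delta2 P) by auto with euler.
  unfold fscal. rewrite (delta1_poly_delta2_zc P), (euler_poly_comm U hU P Sop)
    by auto with euler.
  ring.
Qed.

Lemma delta2_w_row i a b : (1 <= i <= n)%nat -> U (a, b) ->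
  delta2 (w i) a b = th2 * w i a b - th3 * w (n + i)%nat a b.
Proof.
  intros Hi Hab. rewrite (w_row i Hi), (w'_row i Hi).
  rewrite (euler_poly_fscal U hU delta2), (euler_poly_comm U hU delta2 (Mop i)) by auto with euler.
  unfold fscal, zt. rewrite (euler_poly_opc U hU (Mop i) delta2) by auto with euler.
  unfold b'. ring.
Qed.

Lemma delta2_w'_row i a b : (1 <= i <= n)%nat -> U (a, b) ->
  b * (delta2 (w (n + i)%nat) a b + th2 * w i a b - th3 * w (n + i)%nat a b
       - kr i * (b - 1) * Sop (P zt) a b)
  = (b - 1) * (- th2 * kr i * w 0%nat a b + th2 * w i a b
       - kr i * csum (fun j => w (n + j)%nat a b) 1 (i - 1)
       + (th2 + ka 0%nat - ka i) * w (n + i)%nat a b).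
Proof.
  intros Hi Hab.
  rewrite (csum_ext _ (fun j => - (kr j * Mop j zt a b)))
    by (intros j Hj; rewrite w'_row by lia; unfold fscal; ring).
  rewrite csum_opp, (csum_kr_Mop_below U hU n ka rho i zt a b) by auto with euler.
  rewrite w_0, (w_row i Hi), (w'_row i Hi).
  rewrite (euler_poly_fscal U hU delta2), (euler_poly_comm U hU delta2 (Mop i))
    by auto with euler.
  unfold fscal.
  set (L := fun h => Mop i (delta2 h)).
  assert (HL : euler_poly L) by (unfold L; auto with euler).
  assert (Hzc : L zc a b = L (delta2 z) a b + (c' th2 th3 - 1) * L z a b)
    by (apply (euler_poly_opc U hU L delta2); auto with euler).
  change (Mop i (delta2 zt) a b) with (L zt a b).
  unfold zt at 1. rewrite (euler_poly_opc U hU L delta2) by auto with euler.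
  assert (HLzc : L zc a b = (1 - b) * Mop i (Sop zt) a b)
    by (apply (delta1_poly_delta2_zc (Mop i)); auto with euler).
  replace (L (delta2 z) a b) with ((1 - b) * Mop i (Sop zt) a b - (c' th2 th3 - 1) * L z a b)
    by (rewrite <- HLzc, Hzc; ring).
  assert (HM := delta1_poly_t2_Sop_zt (Mop i) a b ltac:(auto with euler) Hab).
  assert (HP := delta1_poly_t2_Sop_zt P a b ltac:(auto with euler) Hab).
  rewrite (euler_poly_comm U hU P Sop) in HP by auto with euler.
  replace (Mop i (Cop 1 zt) a b) with (b * Mop i (Sop zt) a b + th2 * Mop i zc a b)
    by (rewrite HM; ring).
  replace (P (Cop 1 zt) a b) with (b * Sop (P zt) a b + th2 * P zc a b) by (rewrite HP; ring).
  unfold L, zt, zc. rewrite !(euler_poly_opc U hU (Mop i) delta2) by auto with euler.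
  unfold b', c'. ring.
Qed.

Lemma index_cases k : (k <= 2 * n)%nat ->
  k = 0%nat \/ (1 <= k <= n)%nat \/ exists i, k = (n + i)%nat /\ (1 <= i <= n)%nat.
Proof.
  intros Hk. destruct (Nat.eq_dec k 0) as [-> | Hk0]; [left; reflexivity | right].
  destruct (Nat.le_gt_cases k n); [left; lia | right; exists (k - n)%nat; lia].
Qed.

Section PfaffRows.
Variables (a b : C).
Hypothesis Hab : U (a, b).
Hypotheses (Ha0 : a <> RtoC 0) (Ha1 : a - 1 <> RtoC 0) (Hb0 : b <> RtoC 0)
  (Hb1 : b - 1 <> RtoC 0) (Hab' : a - b <> RtoC 0).

Local Notation v := (fun j => w j a b).
Local Notation mat_vec := (mat_vec n v).

Lemma pfaff_t1_row_0 : delta1 (w 0%nat) a b =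
  a * (mat_vec (A11 n th3 ka rho) 0 / (a - 1) + mat_vec (A01 n ka rho) 0 / a
       + mat_vec (At n th2 ka rho) 0 / (a - b)).
Proof.
  rewrite A11_row_0, A01_row_0, At_row_0.
  rewrite delta1_w_0, csum_w, csum_w', delta1_Q_z, delta1_Q_zt, Cop1_P_zt_w_0 by exact Hab.
  field. auto.
Qed.

Lemma pfaff_t1_row_w i : (1 <= i <= n)%nat -> delta1 (w i) a b =
  a * (mat_vec (A11 n th3 ka rho) i / (a - 1) + mat_vec (A01 n ka rho) i / a
       + mat_vec (At n th2 ka rho) i / (a - b)).
Proof.
  intros Hi. rewrite A11_row_w, A01_row_w, At_row_w by exact Hi.
  assert (HR := delta1_w_row i a b Hi Hab).
  replace (delta1 (w i) a b) with (kr i * th3 * delta1 (Q z) a b - (rho i - rho 1%nat) * w i a b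
    - kr i * csum (fun j => w j a b) (S i) n) by (rewrite <- HR; ring).
  rewrite csum_w, delta1_Q_z by exact Hab. field. auto.
Qed.

Lemma pfaff_t1_row_w' i : (1 <= i <= n)%nat -> delta1 (w (n + i)%nat) a b =
  a * (mat_vec (A11 n th3 ka rho) (n + i) / (a - 1) + mat_vec (A01 n ka rho) (n + i) / a
       + mat_vec (At n th2 ka rho) (n + i) / (a - b)).
Proof.
  intros Hi. rewrite A11_row_w', A01_row_w', At_row_w' by exact Hi.
  assert (HR := delta1_w'_row i a b Hi Hab).
  replace (delta1 (w (n + i)%nat) a b) with (- kr i * delta1 (Q zt) a b
    - (rho i - rho 1%nat) * w (n + i)%nat a b
    - kr i * csum (fun j => w (n + j)%nat a b) (S i) n) by (rewrite <- HR; ring).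
  rewrite csum_w', delta1_Q_zt, Cop1_P_zt_w_0 by exact Hab. field. auto.
Qed.

Lemma pfaff_t2_row_0 : delta2 (w 0%nat) a b =
  (b - 1) * (- mat_vec (At n th2 ka rho) 0 / (a - b) + mat_vec (A12 n th2 th3) 0 / (b - 1)
             + mat_vec (A02 n th2 ka rho) 0 / b).
Proof.
  rewrite At_row_0, A12_row_0, A02_row_0, delta2_w_0, csum_w'_w_0 by exact Hab.
  field. auto.
Qed.

Lemma pfaff_t2_row_w i : (1 <= i <= n)%nat -> delta2 (w i) a b =
  (b - 1) * (- mat_vec (At n th2 ka rho) i / (a - b) + mat_vec (A12 n th2 th3) i / (b - 1)
             + mat_vec (A02 n th2 ka rho) i / b).
Proof.
  intros Hi. rewrite At_row_w, A12_row_w, A02_row_w, delta2_w_row by auto.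
  field. auto.
Qed.

Lemma pfaff_t2_row_w' i : (1 <= i <= n)%nat -> delta2 (w (n + i)%nat) a b =
  (b - 1) * (- mat_vec (At n th2 ka rho) (n + i) / (a - b)
             + mat_vec (A12 n th2 th3) (n + i) / (b - 1)
             + mat_vec (A02 n th2 ka rho) (n + i) / b).
Proof.
  intros Hi. rewrite At_row_w', A12_row_w', A02_row_w', csum_w'_w_0 by auto.
  apply (Cmult_cancel_l b); [exact Hb0|].
  assert (HR := delta2_w'_row i a b Hi Hab).
  replace (b * delta2 (w (n + i)%nat) a b) with
    (b * (delta2 (w (n + i)%nat) a b + th2 * w i a b - th3 * w (n + i)%nat a b
          - kr i * (b - 1) * Sop (P zt) a b)
     - b * (th2 * w i a b - th3 * w (n + i)%nat a b - kr i * (b - 1) * Sop (P zt) a b))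
    by ring.
  rewrite HR. field. auto.
Qed.

Lemma pfaff_t1 k : (k <= 2 * n)%nat -> delta1 (w k) a b =
  a * (mat_vec (A11 n th3 ka rho) k / (a - 1) + mat_vec (A01 n ka rho) k / a
       + mat_vec (At n th2 ka rho) k / (a - b)).
Proof.
  intros Hk. destruct (index_cases k Hk) as [-> | [Hi | [i [-> Hi]]]].
  - apply pfaff_t1_row_0.
  - apply pfaff_t1_row_w, Hi.
  - apply pfaff_t1_row_w', Hi.
Qed.

Lemma pfaff_t2 k : (k <= 2 * n)%nat -> delta2 (w k) a b =
  (b - 1) * (- mat_vec (At n th2 ka rho) k / (a - b) + mat_vec (A12 n th2 th3) k / (b - 1)
             + mat_vec (A02 n th2 ka rho) k / b).
Proof.
  intros Hk. destruct (index_cases k Hk) as [-> | [Hi | [i [-> Hi]]]].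
  - apply pfaff_t2_row_0.
  - apply pfaff_t2_row_w, Hi.
  - apply pfaff_t2_row_w', Hi.
Qed.

End PfaffRows.

End Pfaff.

Theorem theorem3p3 (n : nat) (hn : (1 <= n)%nat)
  (th2 th3 : C) (ka rho : nat -> C)
  (U : C * C -> Prop) (hU : open U) (z : fn2) (hz : holo_on U z)
  (hE1 : forall t1 t2, U (t1, t2) -> eq1 n th2 th3 ka rho z t1 t2 = RtoC 0)
  (hE2 : forall t1 t2, U (t1, t2) -> eq2 th2 th3 ka rho z t1 t2 = RtoC 0) :
  forall t1 t2, U (t1, t2) ->
    t1 <> RtoC 0 -> t1 <> RtoC 1 -> t2 <> RtoC 0 -> t2 <> RtoC 1 -> t1 <> t2 ->
    forall k, (k <= 2 * n)%nat ->
      @is_derive C_AbsRing C_NormedModule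
        (fun s => wvec n th2 th3 ka rho z k s t2) t1
        (csum (fun j =>
           (A11 n th3 ka rho k j / (t1 - 1) + A01 n ka rho k j / t1
            + At n th2 ka rho k j / (t1 - t2)) * wvec n th2 th3 ka rho z j t1 t2)
           0 (2 * n)%nat)
      /\
      @is_derive C_AbsRing C_NormedModule
        (fun s => wvec n th2 th3 ka rho z k t1 s) t2
        (csum (fun j =>
           (- At n th2 ka rho k j / (t1 - t2) + A12 n th2 th3 k j / (t2 - 1)
            + A02 n th2 ka rho k j / t2) * wvec n th2 th3 ka rho z j t1 t2)
           0 (2 * n)%nat).
Proof.
  intros t1 t2 Ht H10 H11 H20 H21 H12 k Hk.
  apply Cminus_neq_0 in H11, H21, H12.
  rewrite csum_pfaff_split_t1, csum_pfaff_split_t2.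
  split.
  - apply (is_derive_of_delta1 U hU);
      [apply (holo_w U hU); auto | exact Ht | exact H10 | apply (pfaff_t1 U hU); auto].
  - apply (is_derive_of_delta2 U hU);
      [apply (holo_w U hU); auto | exact Ht | exact H21 | apply (pfaff_t2 U hU); auto].
Qed.
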